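(* Let $x=(x_1,\dots,x_n)$ be a vector of variables, $f=(f_1,\dots,f_n)$ a vector of differential-free terms, and let $y=(y_1,\dots,y_n)$ be fresh variables (not occurring in $f$, in the domain constraints below, or in $e$). Then all instances of the following three formulas are valid: (Uniq) $\big(\langle x'=f(x)\,\&\,Q_1\rangle P\big)\wedge\big(\langle x'=f(x)\,\&\,Q_2\rangle P\big)\leftrightarrow \langle x'=f(x)\,\&\,Q_1\wedge Q_2\rangle P$, for semianalytic formulas $Q_1,Q_2$ and any formula $P$; (Cont) $x=y\rightarrow\big(\langle x'=f(x)\,\&\,e>0\rangle\, x\neq y\;\leftrightarrow\; e>0\big)$, for any differential-free term $e$, provided that the ODE locally evolves $x$, i.e. in every state the value of the vector $f$ is not the zero vector; (Dadj) $\langle x'=f(x)\,\&\,Q(x)\rangle\, x=y\;\leftrightarrow\;\langle y'=-f(y)\,\&\,Q(y)\rangle\, y=x$, for a semianalytic formula $Q(x)$, where $f(y)$, $Q(y)$ denote the results of replacing $x$ by $y$.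
   Context: Variables are real-valued; each variable $x$ has a differential variable $x'$. A state is a map from variables to $\mathbb{R}$. Terms are built from variables, rational constants, $+$, $\cdot$ and finitely many fixed function symbols interpreted as $C^\infty$ functions $\mathbb{R}^k\to\mathbb{R}$, evaluated as usual; differential-free terms contain no differential variables. Semianalytic formulas are built from comparisons $e\sim\tilde e$ ($\sim\in\{=,\ge,>\}$) of differential-free terms by $\wedge,\vee,\neg$. Formulas additionally allow quantifiers and modalities $[\alpha]\phi$, $\langle\alpha\rangle\phi$ for ODEs $\alpha \equiv x'=f(x)\,\&\,Q$ ($Q$ semianalytic; omitted if $Q$ is true). For vectors, $x=y$ abbreviates $\bigwedge_i x_i=y_i$ and $x\neq y$ is its negation. Semantics of ODEs: $(\omega,\nu)\in[\![x'=f(x)\&Q]\!]$ iff there are $T\ge0$ and $\varphi:[0,T]\to$ states with $\varphi(0)=\omega$ on all variables except $x'$, $\varphi(T)=\nu$, and for all $\zeta\in[0,T]$: $\varphi(\zeta)$ satisfies $x'=f(x)\wedge Q$, $\varphi(\zeta)$ agrees with $\varphi(0)$ on all variables other than $x,x'$, and, if $T>0$, $t\mapsto\varphi(t)(x)$ is differentiable at $\zeta$ with derivative $\varphi(\zeta)(x')$. Then $\omega\models[\alpha]\phi$ iff $\nu\models\phi$ for all $\nu$ with $(\omega,\nu)\in[\![\alpha]\!]$, and $\omega\models\langle\alpha\rangle\phi$ iff $\nu\models\phi$ for some such $\nu$. A formula is valid if true in all states. *)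

From Stdlib Require Import Reals QArith Qreals List.
From Coquelicot Require Import Coquelicot.
Open Scope R_scope.

(* Smooth (C^oo) functions R^k -> R.  A point of R^k is represented as a
   map nat -> R of which only the first k coordinates matter.          *)

Definition cupd (v : nat -> R) (i : nat) (h : R) : nat -> R :=
  fun j => if Nat.eqb j i then h else v j.

Definition cont_k (k : nat) (g : (nat -> R) -> R) : Prop :=
  forall v eps, 0 < eps -> exists del, 0 < del /\
    forall w, (forall i, (i < k)%nat -> Rabs (w i - v i) < del) ->
      Rabs (g w - g v) < eps.

Definition pderiv (i : nat) (g : (nat -> R) -> R) : (nat -> R) -> R :=
  fun v => Derive (fun h => g (cupd v i h)) (v i).

Fixpoint Ck (m k : nat) (g : (nat -> R) -> R) : Prop :=
  cont_k k g /\
  match m with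
  | O => True
  | S m' => forall i, (i < k)%nat ->
      (forall v, ex_derive (fun h => g (cupd v i h)) (v i)) /\
      Ck m' k (pderiv i g)
  end.

Definition smooth (k : nat) (g : (nat -> R) -> R) : Prop :=
  (forall v w, (forall i, (i < k)%nat -> v i = w i) -> g v = g w) /\
  forall m, Ck m k g.

(* Pl i = the variable x_i, Df i = its differential variable x_i' *)
Inductive var : Type := Pl (i : nat) | Df (i : nat).

Definition var_eqb (a b : var) : bool :=
  match a, b with
  | Pl i, Pl j => Nat.eqb i j
  | Df i, Df j => Nat.eqb i j
  | _, _ => false
  end.

Definition state := var -> R.

Definition supd (w : state) (v : var) (r : R) : state :=
  fun u => if var_eqb u v then r else w u.

(* Terms.  Function symbols are natural numbers; a signature gives their
   arities, an interpretation gives a C^oo function of that arity.     *)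

Inductive dterm : Type :=
| TVar (v : var)
| TConst (q : Q)
| TPlus (a b : dterm)
| TTimes (a b : dterm)
| TFn (s : nat) (args : list dterm).

Record dL_interp (ar : nat -> nat) : Type := {
  fn : nat -> (nat -> R) -> R;
  fn_smooth : forall s, smooth (ar s) (fn s)
}.
Arguments fn {ar} _ _ _.

Fixpoint teval {ar} (I : dL_interp ar) (w : state) (t : dterm) : R :=
  match t with
  | TVar v => w v
  | TConst q => Q2R q
  | TPlus a b => teval I w a + teval I w b
  | TTimes a b => teval I w a * teval I w b
  | TFn s args => fn I s (fun j => nth j (map (teval I w) args) 0)
  end.

Fixpoint wf_term (ar : nat -> nat) (t : dterm) : Prop :=
  match t with
  | TVar _ | TConst _ => True
  | TPlus a b | TTimes a b => wf_term ar a /\ wf_term ar b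
  | TFn s args => length args = ar s /\
      (fix go (l : list dterm) : Prop :=
         match l with nil => True | a :: l' => wf_term ar a /\ go l' end) args
  end.

Fixpoint dfree_term (t : dterm) : Prop :=
  match t with
  | TVar (Pl _) | TConst _ => True
  | TVar (Df _) => False
  | TPlus a b | TTimes a b => dfree_term a /\ dfree_term b
  | TFn _ args =>
      (fix go (l : list dterm) : Prop :=
         match l with nil => True | a :: l' => dfree_term a /\ go l' end) args
  end.

Fixpoint occurs_term (i : nat) (t : dterm) : Prop :=
  match t with
  | TVar (Pl j) | TVar (Df j) => i = j
  | TConst _ => False
  | TPlus a b | TTimes a b => occurs_term i a \/ occurs_term i b
  | TFn _ args =>
      (fix go (l : list dterm) : Prop :=
         match l with nil => False | a :: l' => occurs_term i a \/ go l' end) args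
  end.

Fixpoint ren_term (m : nat -> nat) (t : dterm) : dterm :=
  match t with
  | TVar (Pl j) => TVar (Pl (m j))
  | TVar (Df j) => TVar (Df (m j))
  | TConst q => TConst q
  | TPlus a b => TPlus (ren_term m a) (ren_term m b)
  | TTimes a b => TTimes (ren_term m a) (ren_term m b)
  | TFn s args => TFn s (map (ren_term m) args)
  end.

(* the renaming x_k |-> y_k (identity elsewhere) *)
Fixpoint lookup (xs ys : list nat) (i : nat) : nat :=
  match xs, ys with
  | x :: xs', y :: ys' => if Nat.eqb i x then y else lookup xs' ys' i
  | _, _ => i
  end.

Inductive cmp : Type := CEq | CGe | CGt.

Definition cmp_sem (c : cmp) (a b : R) : Prop :=
  match c with CEq => a = b | CGe => a >= b | CGt => a > b end.

Inductive sform : Type :=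
| SCmp (c : cmp) (a b : dterm)
| SAnd (p q : sform)
| SOr (p q : sform)
| SNot (p : sform).

Fixpoint sf_sat {ar} (I : dL_interp ar) (w : state) (p : sform) : Prop :=
  match p with
  | SCmp c a b => cmp_sem c (teval I w a) (teval I w b)
  | SAnd p q => sf_sat I w p /\ sf_sat I w q
  | SOr p q => sf_sat I w p \/ sf_sat I w q
  | SNot p => ~ sf_sat I w p
  end.

Fixpoint dfree_sf (p : sform) : Prop :=
  match p with
  | SCmp _ a b => dfree_term a /\ dfree_term b
  | SAnd p q | SOr p q => dfree_sf p /\ dfree_sf q
  | SNot p => dfree_sf p
  end.

Fixpoint wf_sf (ar : nat -> nat) (p : sform) : Prop :=
  match p with
  | SCmp _ a b => wf_term ar a /\ wf_term ar b
  | SAnd p q | SOr p q => wf_sf ar p /\ wf_sf ar q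
  | SNot p => wf_sf ar p
  end.

Fixpoint occurs_sf (i : nat) (p : sform) : Prop :=
  match p with
  | SCmp _ a b => occurs_term i a \/ occurs_term i b
  | SAnd p q | SOr p q => occurs_sf i p \/ occurs_sf i q
  | SNot p => occurs_sf i p
  end.

Fixpoint ren_sf (m : nat -> nat) (p : sform) : sform :=
  match p with
  | SCmp c a b => SCmp c (ren_term m a) (ren_term m b)
  | SAnd p q => SAnd (ren_sf m p) (ren_sf m q)
  | SOr p q => SOr (ren_sf m p) (ren_sf m q)
  | SNot p => SNot (ren_sf m p)
  end.

(* ODEs  x' = f(x) & Q  (ovars = x, orhs = f, odom = Q) *)

Record ode : Type := mkODE { ovars : list nat; orhs : list dterm; odom : sform }.

Definition wf_ode (ar : nat -> nat) (o : ode) : Prop :=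
  NoDup (ovars o) /\ length (orhs o) = length (ovars o) /\
  List.Forall dfree_term (orhs o) /\ List.Forall (wf_term ar) (orhs o) /\
  dfree_sf (odom o) /\ wf_sf ar (odom o).

Definition has_deriv_within (T : R) (g : R -> R) (z l : R) : Prop :=
  filterlim (fun s => (g s - g z) / (s - z))
    (within (fun s => 0 <= s <= T /\ s <> z) (locally z)) (locally l).

Definition ode_rel {ar} (I : dL_interp ar) (o : ode) (w nu : state) : Prop :=
  exists (T : R) (phi : R -> state),
    0 <= T /\
    (forall v, ~ (exists i, In i (ovars o) /\ v = Df i) -> phi 0 v = w v) /\
    phi T = nu /\
    forall z, 0 <= z <= T ->
      List.Forall2 (fun i t => phi z (Df i) = teval I (phi z) t) (ovars o) (orhs o) /\
      sf_sat I (phi z) (odom o) /\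
      (forall v, ~ (exists i, In i (ovars o) /\ (v = Pl i \/ v = Df i)) ->
                 phi z v = phi 0 v) /\
      (0 < T -> forall i, In i (ovars o) ->
         has_deriv_within T (fun s => phi s (Pl i)) z (phi z (Df i))).

Inductive fml : Type :=
| FCmp (c : cmp) (a b : dterm)
| FAnd (p q : fml)
| FOr (p q : fml)
| FNot (p : fml)
| FAll (v : var) (p : fml)
| FEx (v : var) (p : fml)
| FBox (o : ode) (p : fml)
| FDia (o : ode) (p : fml).

Fixpoint fsat {ar} (I : dL_interp ar) (w : state) (p : fml) : Prop :=
  match p with
  | FCmp c a b => cmp_sem c (teval I w a) (teval I w b)
  | FAnd p q => fsat I w p /\ fsat I w q
  | FOr p q => fsat I w p \/ fsat I w q
  | FNot p => ~ fsat I w p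
  | FAll v p => forall r, fsat I (supd w v r) p
  | FEx v p => exists r, fsat I (supd w v r) p
  | FBox o p => forall nu, ode_rel I o w nu -> fsat I nu p
  | FDia o p => exists nu, ode_rel I o w nu /\ fsat I nu p
  end.

Fixpoint wf_fml (ar : nat -> nat) (p : fml) : Prop :=
  match p with
  | FCmp _ a b => wf_term ar a /\ wf_term ar b
  | FAnd p q | FOr p q => wf_fml ar p /\ wf_fml ar q
  | FNot p | FAll _ p | FEx _ p => wf_fml ar p
  | FBox o p | FDia o p => wf_ode ar o /\ wf_fml ar p
  end.

Definition valid {ar} (I : dL_interp ar) (p : fml) : Prop := forall w, fsat I w p.

Definition FImp (p q : fml) : fml := FOr (FNot p) q.
Definition FIff (p q : fml) : fml := FAnd (FImp p q) (FImp q p).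
Definition FTrue : fml := FCmp CEq (TConst 0%Q) (TConst 0%Q).

(* x = y  (componentwise conjunction; x <> y is its negation) *)
Fixpoint vec_eq (xs ys : list nat) : fml :=
  match xs, ys with
  | x :: xs', y :: ys' => FAnd (FCmp CEq (TVar (Pl x)) (TVar (Pl y))) (vec_eq xs' ys')
  | _, _ => FTrue
  end.

Definition TNeg (t : dterm) : dterm := TTimes (TConst (-1)%Q) t.

(* Every term denotes a smooth function, so the vector field of x' = f(x) is locally
   Lipschitz and its solutions are unique: by a continuity induction along the interval where
   two solutions agree, using that on a short window their distance is at most half of any
   bound on it.  Hence the shorter of two runs from the same state is a prefix of the longer
   one and satisfies both domain constraints (Uniq).  Reversing time, s |-> T - s, turns a run
   of x' = f(x) from x to y into a run of y' = -f(y) from y to x (Dadj).  For (Cont), the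
   left-hand side gives e > 0 at time 0; conversely, if e > 0, Picard iteration gives a
   solution on a short interval [0, h] that stays where e > 0 and, as f(x) <> 0, moves by
   about h f(x) <> 0, so it ends with x <> y. *)

From Coquelicot Require Import Coquelicot.
From Stdlib Require Import Reals QArith Qreals List Lra Lia Classical FunctionalExtensionality.
Import ListNotations.
Open Scope R_scope.

(** * Real analysis on intervals *)

Lemma locally_R_iff (x : R) (P : R -> Prop) :
  locally x P <-> exists d, 0 < d /\ forall y, Rabs (y - x) < d -> P y.
Proof.
  split.
  - intros [e He]. exists e. split; [apply cond_pos | exact He].
  - intros [d [Hd H]]. exists (mkposreal d Hd). exact H.
Qed.

Lemma continuous_R_iff (g : R -> R) (x : R) :
  continuous g x <-> forall eps, 0 < eps -> exists d, 0 < d /\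
    forall y, Rabs (y - x) < d -> Rabs (g y - g x) < eps.
Proof.
  unfold continuous. rewrite filterlim_locally. split.
  - intros H eps Heps. apply locally_R_iff, (H (mkposreal eps Heps)).
  - intros H eps. apply locally_R_iff, (H eps (cond_pos eps)).
Qed.

Lemma has_deriv_within_iff (T : R) (g : R -> R) (z l : R) :
  has_deriv_within T g z l <->
  forall eps, 0 < eps -> exists d, 0 < d /\ forall s, 0 <= s <= T -> s <> z ->
    Rabs (s - z) < d -> Rabs ((g s - g z) / (s - z) - l) < eps.
Proof.
  unfold has_deriv_within. rewrite filterlim_locally. split.
  - intros H eps Heps.
    destruct (proj1 (locally_R_iff _ _) (H (mkposreal eps Heps))) as [d [Hd Hd']].
    exists d. split; [exact Hd|]. intros s Hs Hsz Hsd. apply Hd'; auto.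
  - intros H eps. apply locally_R_iff.
    destruct (H eps (cond_pos eps)) as [d [Hd Hd']].
    exists d. split; [exact Hd|]. intros s Hs [Hs1 Hs2]. apply Hd'; auto.
Qed.

Lemma is_derive_iff (g : R -> R) (x l : R) :
  is_derive g x l <-> forall eps, 0 < eps -> exists d, 0 < d /\ forall h, h <> 0 ->
    Rabs h < d -> Rabs ((g (x + h) - g x) / h - l) < eps.
Proof.
  rewrite is_derive_Reals. split.
  - intros H eps Heps. destruct (H eps Heps) as [d Hd].
    exists d. split; [apply cond_pos | exact Hd].
  - intros H eps Heps. destruct (H eps Heps) as [d [Hd Hd']].
    exists (mkposreal d Hd). exact Hd'.
Qed.

Lemma is_derive_has_deriv_within (T : R) (g : R -> R) (z l : R) :
  is_derive g z l -> has_deriv_within T g z l.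
Proof.
  intros H. apply has_deriv_within_iff. intros eps Heps.
  destruct (proj1 (is_derive_iff _ _ _) H eps Heps) as [d [Hd Hd']].
  exists d. split; [exact Hd|]. intros s _ Hsz Hsd.
  specialize (Hd' (s - z)). replace (z + (s - z)) with s in Hd' by ring.
  apply Hd'; auto. lra.
Qed.

Lemma has_deriv_within_is_derive (T : R) (g : R -> R) (z l : R) :
  0 < z < T -> has_deriv_within T g z l -> is_derive g z l.
Proof.
  intros Hz H. apply is_derive_iff. intros eps Heps.
  destruct (proj1 (has_deriv_within_iff _ _ _ _) H eps Heps) as [d [Hd Hd']].
  exists (Rmin d (Rmin z (T - z))). split; [repeat apply Rmin_pos; lra|].
  intros h Hh Hhd.
  pose proof (Rmin_l d (Rmin z (T - z))). pose proof (Rmin_r d (Rmin z (T - z))).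
  pose proof (Rmin_l z (T - z)). pose proof (Rmin_r z (T - z)).
  apply Rabs_def2 in Hhd.
  specialize (Hd' (z + h)). replace (z + h - z) with h in Hd' by ring.
  apply Hd'; [lra | lra | apply Rabs_def1; lra].
Qed.

Lemma has_deriv_within_ext (T : R) (g1 g2 : R -> R) (z l : R) :
  (forall s, 0 <= s <= T -> g1 s = g2 s) -> 0 <= z <= T ->
  has_deriv_within T g1 z l -> has_deriv_within T g2 z l.
Proof.
  intros E Hz H. rewrite has_deriv_within_iff in *. intros eps Heps.
  destruct (H eps Heps) as [d [Hd Hd']].
  exists d. split; [exact Hd|]. intros s Hs Hsz Hsd. rewrite <- !E; auto.
Qed.

Lemma has_deriv_within_le (T1 T2 : R) (g : R -> R) (z l : R) :
  T1 <= T2 -> has_deriv_within T2 g z l -> has_deriv_within T1 g z l.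
Proof.
  intros HT H. rewrite has_deriv_within_iff in *. intros eps Heps.
  destruct (H eps Heps) as [d [Hd Hd']].
  exists d. split; [exact Hd|]. intros s Hs Hsz Hsd. apply Hd'; auto. lra.
Qed.

Lemma has_deriv_within_reverse (T : R) (g : R -> R) (z l : R) :
  has_deriv_within T g z l -> has_deriv_within T (fun s => g (T - s)) (T - z) (- l).
Proof.
  intros H. rewrite has_deriv_within_iff in *. intros eps Heps.
  destruct (H eps Heps) as [d [Hd Hd']].
  exists d. split; [exact Hd|]. intros s Hs Hsz Hsd.
  replace (T - (T - z)) with z by ring.
  replace ((g (T - s) - g z) / (s - (T - z)) - - l)
    with (- ((g (T - s) - g z) / (T - s - z) - l))
    by (field; split; intro; apply Hsz; lra).
  rewrite Rabs_Ropp. apply Hd'; [lra | lra |].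
  rewrite <- Rabs_Ropp. replace (- (T - s - z)) with (s - (T - z)) by ring. exact Hsd.
Qed.

Definition continuous_on_at (a b : R) (g : R -> R) (z : R) : Prop :=
  forall eps, 0 < eps -> exists d, 0 < d /\ forall s, a <= s <= b -> Rabs (s - z) < d ->
    Rabs (g s - g z) < eps.

Lemma continuous_on_at_sub (a b a' b' : R) (g : R -> R) (z : R) :
  a <= a' -> b' <= b -> continuous_on_at a b g z -> continuous_on_at a' b' g z.
Proof.
  intros Ha Hb H eps Heps. destruct (H eps Heps) as [d [Hd Hd']].
  exists d. split; [exact Hd|]. intros s Hs. apply Hd'. lra.
Qed.

Lemma continuous_on_at_minus (a b : R) (g1 g2 : R -> R) (z : R) :
  continuous_on_at a b g1 z -> continuous_on_at a b g2 z ->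
  continuous_on_at a b (fun s => g1 s - g2 s) z.
Proof.
  intros H1 H2 eps Heps.
  destruct (H1 (eps / 2) ltac:(lra)) as [d1 [Hd1 H1']].
  destruct (H2 (eps / 2) ltac:(lra)) as [d2 [Hd2 H2']].
  exists (Rmin d1 d2). split; [apply Rmin_pos; auto|]. intros s Hs Hsd.
  pose proof (Rmin_l d1 d2). pose proof (Rmin_r d1 d2).
  specialize (H1' s Hs ltac:(lra)). specialize (H2' s Hs ltac:(lra)).
  replace (g1 s - g2 s - (g1 z - g2 z)) with ((g1 s - g1 z) - (g2 s - g2 z)) by ring.
  eapply Rle_lt_trans; [apply Rabs_triang|]. rewrite Rabs_Ropp. lra.
Qed.

Lemma has_deriv_within_continuous_on_at (T : R) (g : R -> R) (z l : R) :
  has_deriv_within T g z l -> continuous_on_at 0 T g z.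
Proof.
  intros H eps Heps.
  destruct (proj1 (has_deriv_within_iff _ _ _ _) H 1 Rlt_0_1) as [d [Hd Hd']].
  pose proof (Rabs_pos l).
  set (K := Rabs l + 2).
  exists (Rmin d (eps / K)). split; [apply Rmin_pos; unfold K; auto; apply Rdiv_lt_0_compat; lra|].
  intros s Hs Hsd. pose proof (Rmin_l d (eps / K)). pose proof (Rmin_r d (eps / K)).
  destruct (Req_dec s z) as [->|Hsz].
  { rewrite Rminus_diag, Rabs_R0. exact Heps. }
  specialize (Hd' s Hs Hsz ltac:(lra)).
  pose proof (Rabs_triang_inv ((g s - g z) / (s - z)) l).
  replace (g s - g z) with ((g s - g z) / (s - z) * (s - z)) by (field; lra).
  rewrite Rabs_mult.
  assert (Hlt : K * Rabs (s - z) < eps).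
  { replace eps with (K * (eps / K)) by (field; unfold K; lra).
    apply Rmult_lt_compat_l; [unfold K; lra | lra]. }
  pose proof (Rabs_pos (s - z)).
  apply Rle_lt_trans with (K * Rabs (s - z)); [|exact Hlt].
  apply Rmult_le_compat_r; unfold K; lra.
Qed.

Definition clamp (a b s : R) : R := Rmax a (Rmin b s).

Lemma clamp_in (a b s : R) : a <= b -> a <= clamp a b s <= b.
Proof. intros. unfold clamp, Rmax, Rmin. repeat destruct Rle_dec; lra. Qed.

Lemma clamp_id (a b s : R) : a <= s <= b -> clamp a b s = s.
Proof. intros. unfold clamp, Rmax, Rmin. repeat destruct Rle_dec; lra. Qed.

Lemma clamp_lipschitz (a b s t : R) :
  a <= b -> Rabs (clamp a b s - clamp a b t) <= Rabs (s - t).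
Proof.
  intros. unfold clamp, Rmax, Rmin. repeat destruct Rle_dec;
  unfold Rabs; repeat destruct Rcase_abs; lra.
Qed.

Lemma continuous_clamp (a b t : R) : a <= b -> continuous (clamp a b) t.
Proof.
  intros Hab. apply continuous_R_iff. intros eps Heps.
  exists eps. split; [exact Heps|]. intros y Hy.
  eapply Rle_lt_trans; [apply clamp_lipschitz|]; auto.
Qed.

Lemma MVT_on (g dg : R -> R) (a b : R) :
  a < b -> (forall x, a < x < b -> is_derive g x (dg x)) ->
  (forall x, a <= x <= b -> continuous_on_at a b g x) ->
  exists c, a <= c <= b /\ g b - g a = dg c * (b - a).
Proof.
  intros Hab Hder Hcont.
  (* [g] is only continuous on [a, b]; [g o clamp a b] is continuous everywhere *)
  destruct (MVT_gen (fun s => g (clamp a b s)) a b dg) as [c [Hc Heq]].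
  - rewrite Rmin_left, Rmax_right by lra. intros x Hx.
    apply is_derive_ext_loc with g; [|apply Hder; lra].
    apply locally_R_iff. exists (Rmin (x - a) (b - x)). split; [apply Rmin_pos; lra|].
    intros y Hy. pose proof (Rmin_l (x - a) (b - x)). pose proof (Rmin_r (x - a) (b - x)).
    apply Rabs_def2 in Hy. rewrite clamp_id; auto. lra.
  - rewrite Rmin_left, Rmax_right by lra. intros x Hx.
    apply continuity_pt_filterlim, (continuous_R_iff (fun s => g (clamp a b s))).
    intros eps Heps.
    destruct (Hcont x Hx eps Heps) as [d [Hd Hd']]. exists d. split; [exact Hd|].
    intros y Hy. rewrite (clamp_id a b x) by lra. apply Hd'; [apply clamp_in; lra|].
    pose proof (clamp_lipschitz a b y x ltac:(lra)) as Hl.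
    rewrite (clamp_id a b x) in Hl by lra. lra.
  - rewrite Rmin_left, Rmax_right in Hc by lra.
    rewrite !clamp_id in Heq by lra. exists c. auto.
Qed.

Lemma MVT_bound (g dg : R -> R) (a b K : R) :
  a <= b -> (forall x, a < x < b -> is_derive g x (dg x)) ->
  (forall x, a <= x <= b -> continuous_on_at a b g x) ->
  (forall x, a <= x <= b -> Rabs (dg x) <= K) ->
  Rabs (g b - g a) <= K * (b - a).
Proof.
  intros Hab Hder Hcont HK. destruct (Req_dec a b) as [<-|Hne].
  { rewrite !Rminus_diag, Rabs_R0. lra. }
  destruct (MVT_on g dg a b ltac:(lra) Hder Hcont) as [c [Hc ->]].
  rewrite Rabs_mult, (Rabs_right (b - a)) by lra.
  apply Rmult_le_compat_r; [lra | auto].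
Qed.

Lemma is_derive_continuous (g : R -> R) (x l : R) : is_derive g x l -> continuous g x.
Proof.
  intros H. apply continuity_pt_filterlim, derivable_continuous_pt.
  exists l. apply is_derive_Reals, H.
Qed.

Lemma mult_div_succ_le (K a : R) : 0 <= K -> 0 < a -> K * (a / (K + 1)) <= a.
Proof.
  intros HK Ha. replace (K * (a / (K + 1))) with (a - a / (K + 1)) by (field; lra).
  assert (0 < a / (K + 1)) by (apply Rdiv_lt_0_compat; lra). lra.
Qed.

Lemma contraction_window (K a : R) : 0 <= K -> 0 < a ->
  exists e, 0 < e /\ e <= a /\ K * e <= 1 / 2.
Proof.
  intros HK Ha. exists (Rmin a (1 / 2 / (K + 1))).
  assert (Hb : 0 < 1 / 2 / (K + 1)) by (apply Rdiv_lt_0_compat; lra).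
  split; [apply Rmin_pos; auto|]. split; [apply Rmin_l|].
  eapply Rle_trans; [apply Rmult_le_compat_l; [exact HK | apply Rmin_r]|].
  apply mult_div_succ_le; lra.
Qed.

Lemma halvings_small (C eps : R) : 0 < eps -> exists N, C / 2 ^ N < eps.
Proof.
  intros Heps.
  destruct (Pow_x_infinity 2 ltac:(rewrite Rabs_right; lra) (Rabs C / eps + 1)) as [N HN].
  exists N. specialize (HN N (le_n N)).
  rewrite Rabs_right in HN by (apply Rle_ge, pow_le; lra).
  assert (Hp : 0 < 2 ^ N) by (apply pow_lt; lra).
  apply Rmult_lt_reg_r with (2 ^ N); auto. replace (C / 2 ^ N * 2 ^ N) with C by (field; lra).
  assert (eps * (Rabs C / eps + 1) <= eps * 2 ^ N) by (apply Rmult_le_compat_l; lra).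
  replace (eps * (Rabs C / eps + 1)) with (Rabs C + eps) in H by (field; lra).
  pose proof (Rle_abs C). lra.
Qed.

Lemma le_halvings_eq0 (x C : R) : 0 <= x -> (forall k, x <= C / 2 ^ k) -> x = 0.
Proof.
  intros Hx H. destruct (Req_dec x 0) as [|Hne]; auto.
  destruct (halvings_small C x ltac:(lra)) as [N HN]. specialize (H N). lra.
Qed.

Lemma halving_bound_eq0 (P : R -> Prop) (D : R -> R) (C : R) :
  (forall s, P s -> 0 <= D s) -> (forall s, P s -> D s <= C) ->
  (forall B, (forall s, P s -> D s <= B) -> forall s, P s -> D s <= B / 2) ->
  forall s, P s -> D s = 0.
Proof.
  intros H0 HC Hhalf s Hs. apply le_halvings_eq0 with C; auto.
  intros k. revert s Hs. induction k as [|k IH]; intros s Hs.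
  - rewrite pow_O, Rdiv_1_r. auto.
  - replace (C / 2 ^ S k) with (C / 2 ^ k / 2) by (simpl; field; apply pow_nonzero; lra).
    apply Hhalf; auto.
Qed.

Definition dterm_ind_nested (P : dterm -> Prop)
  (HV : forall v, P (TVar v)) (HC : forall q, P (TConst q))
  (HP : forall a b, P a -> P b -> P (TPlus a b))
  (HT : forall a b, P a -> P b -> P (TTimes a b))
  (HF : forall s args, Forall P args -> P (TFn s args)) :
  forall t, P t :=
  fix rec (t : dterm) : P t :=
  match t with
  | TVar v => HV v
  | TConst q => HC q
  | TPlus a b => HP a b (rec a) (rec b)
  | TTimes a b => HT a b (rec a) (rec b)
  | TFn s args => HF s args
      ((fix go (l : list dterm) : Forall P l :=
         match l with
         | nil => Forall_nil P
         | cons a l' => Forall_cons a (rec a) (go l')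
         end) args)
  end.

Lemma dfree_TFn (s : nat) (args : list dterm) :
  dfree_term (TFn s args) <-> Forall dfree_term args.
Proof.
  induction args as [|a l IH]; simpl; [split; auto|].
  rewrite Forall_cons_iff, <- IH. simpl. tauto.
Qed.

Lemma wf_TFn (ar : nat -> nat) (s : nat) (args : list dterm) :
  wf_term ar (TFn s args) <-> length args = ar s /\ Forall (wf_term ar) args.
Proof.
  simpl. apply and_iff_compat_l.
  induction args as [|a l IH]; simpl; [split; auto|].
  rewrite Forall_cons_iff, <- IH. tauto.
Qed.

Lemma occurs_TFn (i s : nat) (args : list dterm) :
  occurs_term i (TFn s args) <-> Exists (occurs_term i) args.
Proof.
  induction args as [|a l IH]; simpl; [split; [tauto | intro H; inversion H]|].
  rewrite Exists_cons, <- IH. simpl. tauto.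
Qed.

Lemma teval_ren_term {ar} (I : dL_interp ar) (m : nat -> nat) (w1 w2 : state) (t : dterm) :
  dfree_term t -> (forall j, occurs_term j t -> w2 (Pl (m j)) = w1 (Pl j)) ->
  teval I w2 (ren_term m t) = teval I w1 t.
Proof.
  induction t as [[j|j]|q|a b IHa IHb|a b IHa IHb|s args IH] using dterm_ind_nested;
    simpl; intros Hd Ho; try contradiction.
  - apply Ho. reflexivity.
  - reflexivity.
  - destruct Hd. rewrite IHa, IHb; auto.
  - destruct Hd. rewrite IHa, IHb; auto.
  - f_equal. apply functional_extensionality. intro k. rewrite map_map. f_equal.
    apply map_ext_in. intros a Ha.
    apply (dfree_TFn s args) in Hd. rewrite Forall_forall in IH, Hd. apply IH; auto.
    intros j Hj. apply Ho, (occurs_TFn j s args), Exists_exists. eauto.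
Qed.

Lemma ren_term_id (t : dterm) : ren_term (fun j => j) t = t.
Proof.
  induction t as [[j|j]|q|a b IHa IHb|a b IHa IHb|s args IH] using dterm_ind_nested;
    simpl; try congruence.
  f_equal. induction IH; simpl; congruence.
Qed.

Lemma teval_agree {ar} (I : dL_interp ar) (w1 w2 : state) (t : dterm) :
  dfree_term t -> (forall j, occurs_term j t -> w1 (Pl j) = w2 (Pl j)) ->
  teval I w1 t = teval I w2 t.
Proof.
  intros Hd Ho. rewrite <- (ren_term_id t) at 1. apply teval_ren_term; auto.
Qed.

Lemma sf_sat_ren_sf {ar} (I : dL_interp ar) (m : nat -> nat) (w1 w2 : state) (p : sform) :
  dfree_sf p -> (forall j, occurs_sf j p -> w2 (Pl (m j)) = w1 (Pl j)) ->
  (sf_sat I w2 (ren_sf m p) <-> sf_sat I w1 p).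
Proof.
  induction p; simpl; intros Hd Ho.
  - destruct Hd. rewrite !teval_ren_term with (w1 := w1); auto; tauto.
  - destruct Hd. rewrite IHp1, IHp2; auto; tauto.
  - destruct Hd. rewrite IHp1, IHp2; auto; tauto.
  - rewrite IHp; auto; tauto.
Qed.

Lemma ren_sf_id (p : sform) : ren_sf (fun j => j) p = p.
Proof. induction p; simpl; rewrite ?ren_term_id; congruence. Qed.

Lemma sf_sat_agree {ar} (I : dL_interp ar) (w1 w2 : state) (p : sform) :
  dfree_sf p -> (forall j, occurs_sf j p -> w1 (Pl j) = w2 (Pl j)) ->
  (sf_sat I w1 p <-> sf_sat I w2 p).
Proof.
  intros Hd Ho. rewrite <- (ren_sf_id p) at 1. apply sf_sat_ren_sf; auto.
Qed.

(** * Local Lipschitz continuity *)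

Definition sum_over (J : list nat) (g : nat -> R) : R :=
  fold_right (fun j acc => g j + acc) 0 J.

Definition dist1 (J : list nat) (u v : nat -> R) : R :=
  sum_over J (fun j => Rabs (u j - v j)).

Definition agree_off (J : list nat) (u0 u : nat -> R) : Prop :=
  forall j, ~ In j J -> u j = u0 j.

Definition near_on (J : list nat) (d : R) (u0 u : nat -> R) : Prop :=
  forall j, In j J -> Rabs (u j - u0 j) <= d.

Lemma sum_over_nonneg (J : list nat) (g : nat -> R) :
  (forall j, In j J -> 0 <= g j) -> 0 <= sum_over J g.
Proof.
  induction J as [|a J IH]; simpl; intros H; [lra|].
  pose proof (H a (or_introl eq_refl)). pose proof (IH (fun j Hj => H j (or_intror Hj))). lra.
Qed.

Lemma sum_over_le (J : list nat) (g h : nat -> R) :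
  (forall j, In j J -> g j <= h j) -> sum_over J g <= sum_over J h.
Proof.
  induction J as [|a J IH]; simpl; intros H; [lra|].
  pose proof (H a (or_introl eq_refl)). pose proof (IH (fun j Hj => H j (or_intror Hj))). lra.
Qed.

Lemma sum_over_plus (J : list nat) (g h : nat -> R) :
  sum_over J (fun j => g j + h j) = sum_over J g + sum_over J h.
Proof. induction J as [|a J IH]; simpl; [|rewrite IH]; lra. Qed.

Lemma sum_over_app (S1 S2 : list nat) (g : nat -> R) :
  sum_over (S1 ++ S2) g = sum_over S1 g + sum_over S2 g.
Proof. induction S1 as [|a S1 IH]; simpl; [|rewrite IH]; lra. Qed.

Lemma sum_over_term (J : list nat) (g : nat -> R) (j : nat) :
  (forall j, In j J -> 0 <= g j) -> In j J -> g j <= sum_over J g.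
Proof.
  induction J as [|a J IH]; simpl; intros H Hj; [contradiction|].
  pose proof (sum_over_nonneg J g (fun j Hj => H j (or_intror Hj))).
  destruct Hj as [<-|Hj]; [lra|].
  pose proof (H a (or_introl eq_refl)). pose proof (IH (fun j Hj => H j (or_intror Hj)) Hj). lra.
Qed.

Lemma sum_over_bound (J : list nat) (g : nat -> R) (c : R) :
  (forall j, In j J -> g j <= c) -> sum_over J g <= INR (length J) * c.
Proof.
  induction J as [|a J IH]; intros H; [simpl; lra|].
  change (g a + sum_over J g <= INR (S (length J)) * c).
  rewrite S_INR. pose proof (H a (or_introl eq_refl)).
  pose proof (IH (fun j Hj => H j (or_intror Hj))). lra.
Qed.

Lemma dist1_nonneg (J : list nat) (u v : nat -> R) : 0 <= dist1 J u v.
Proof. apply sum_over_nonneg. intros; apply Rabs_pos. Qed.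

Lemma dist1_sym (J : list nat) (u v : nat -> R) : dist1 J u v = dist1 J v u.
Proof. unfold dist1. f_equal. apply functional_extensionality. intro j. apply Rabs_minus_sym. Qed.

Lemma dist1_triangle (J : list nat) (u v w : nat -> R) : dist1 J u w <= dist1 J u v + dist1 J v w.
Proof.
  unfold dist1. rewrite <- sum_over_plus. apply sum_over_le. intros j _.
  replace (u j - w j) with ((u j - v j) + (v j - w j)) by ring. apply Rabs_triang.
Qed.

Lemma dist1_term (J : list nat) (u v : nat -> R) (j : nat) :
  In j J -> Rabs (u j - v j) <= dist1 J u v.
Proof.
  intros Hj. apply (sum_over_term J (fun j => Rabs (u j - v j))); auto. intros; apply Rabs_pos.
Qed.

Lemma dist1_eq0 (J : list nat) (u v : nat -> R) :
  dist1 J u v = 0 -> forall j, In j J -> u j = v j.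
Proof.
  intros H j Hj. pose proof (dist1_term J u v j Hj). pose proof (Rabs_pos (u j - v j)).
  assert (Rabs (u j - v j) = 0) by lra. apply Rabs_eq_0 in H2. lra.
Qed.

Lemma dist1_near_on (J : list nat) (d : R) (u0 u : nat -> R) :
  near_on J d u0 u -> dist1 J u u0 <= INR (length J) * d.
Proof. intros H. apply sum_over_bound. exact H. Qed.

Lemma near_on_mono (J : list nat) (d d' : R) (u0 u : nat -> R) :
  d' <= d -> near_on J d' u0 u -> near_on J d u0 u.
Proof. intros Hd H j Hj. specialize (H j Hj). lra. Qed.

Lemma near_on_refl (J : list nat) (d : R) (u0 : nat -> R) : 0 <= d -> near_on J d u0 u0.
Proof. intros Hd j _. rewrite Rminus_diag, Rabs_R0. exact Hd. Qed.

Lemma agree_off_refl (J : list nat) (u0 : nat -> R) : agree_off J u0 u0.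
Proof. intros j _. reflexivity. Qed.

Lemma agree_off_trans (J : list nat) (u0 u1 u : nat -> R) :
  agree_off J u0 u1 -> agree_off J u0 u -> agree_off J u1 u.
Proof. intros H1 H j Hj. rewrite H, H1; auto. Qed.

Lemma list_delta {A} (J : list A) (Q : A -> R -> Prop) :
  (forall j d d', Q j d -> 0 < d' <= d -> Q j d') ->
  (forall j, In j J -> exists d, 0 < d /\ Q j d) ->
  exists d, 0 < d /\ forall j, In j J -> Q j d.
Proof.
  intros Hm. induction J as [|a J IH]; intros H.
  - exists 1. split; [lra | intros j []].
  - destruct (H a (or_introl eq_refl)) as [da [Hda Qa]].
    destruct IH as [dl [Hdl Ql]]; [intros j Hj; apply H; right; auto|].
    pose proof (Rmin_l da dl). pose proof (Rmin_r da dl). pose proof (Rmin_pos da dl Hda Hdl).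
    exists (Rmin da dl). split; [auto|].
    intros j [<-|Hj]; [apply Hm with da | apply Hm with dl]; auto.
Qed.

Lemma cupd_same (v : nat -> R) (i : nat) (a : R) : cupd v i a i = a.
Proof. unfold cupd. rewrite Nat.eqb_refl. reflexivity. Qed.

Lemma cupd_cupd (v : nat -> R) (i : nat) (a b : R) : cupd (cupd v i a) i b = cupd v i b.
Proof. apply functional_extensionality. intro j. unfold cupd. destruct (Nat.eqb j i); auto. Qed.

Lemma cupd_id (v : nat -> R) (i : nat) : cupd v i (v i) = v.
Proof.
  apply functional_extensionality. intro j. unfold cupd.
  destruct (Nat.eqb_spec j i); subst; auto.
Qed.

Lemma partial_MVT_bound (g : (nat -> R) -> R) (i : nat) (v : nat -> R) (a b B : R) :
  (forall w, ex_derive (fun h => g (cupd w i h)) (w i)) ->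
  (forall c, Rmin a b <= c <= Rmax a b -> Rabs (pderiv i g (cupd v i c)) <= B) ->
  Rabs (g (cupd v i b) - g (cupd v i a)) <= B * Rabs (b - a).
Proof.
  intros Hex HB.
  assert (Hder : forall h, is_derive (fun h => g (cupd v i h)) h (pderiv i g (cupd v i h))).
  { intro h. specialize (Hex (cupd v i h)). rewrite cupd_same in Hex.
    unfold pderiv. rewrite cupd_same.
    rewrite (Derive_ext _ (fun h => g (cupd v i h))) by (intro; rewrite cupd_cupd; reflexivity).
    apply Derive_correct.
    eapply ex_derive_ext; [|exact Hex]. intro t. simpl. rewrite cupd_cupd. reflexivity. }
  destruct (MVT_gen (fun h => g (cupd v i h)) a b (fun h => pderiv i g (cupd v i h)))
    as [c [Hc ->]].
  - intros; apply Hder.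
  - intros x _. apply continuity_pt_filterlim. eapply is_derive_continuous, Hder.
  - rewrite Rabs_mult. apply Rmult_le_compat_r; [apply Rabs_pos | auto].
Qed.

Lemma smooth_pderiv_bounded (k : nat) (g : (nat -> R) -> R) (v0 : nat -> R) :
  smooth k g -> exists del, 0 < del /\ exists B, 0 <= B /\
    forall w, (forall i, (i < k)%nat -> Rabs (w i - v0 i) <= del) ->
    forall i, (i < k)%nat -> Rabs (pderiv i g w) <= B.
Proof.
  intros [_ Hck]. destruct (Hck 1%nat) as [_ H1].
  destruct (list_delta (seq 0 k) (fun i del => forall w,
      (forall i', (i' < k)%nat -> Rabs (w i' - v0 i') < del) ->
      Rabs (pderiv i g w - pderiv i g v0) < 1)) as [del [Hdel Hq]].
  { intros j d d' Hq Hd' w Hw. apply Hq. intros i' Hi'. specialize (Hw i' Hi'). lra. }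
  { intros j Hj. apply in_seq in Hj. destruct (H1 j ltac:(lia)) as [_ [Hc _]].
    destruct (Hc v0 1 Rlt_0_1) as [d [Hd Hd']]. exists d. auto. }
  set (B := sum_over (seq 0 k) (fun i => Rabs (pderiv i g v0) + 1)).
  assert (Hpos : forall i, In i (seq 0 k) -> 0 <= Rabs (pderiv i g v0) + 1).
  { intros i _. pose proof (Rabs_pos (pderiv i g v0)). lra. }
  exists (del / 2). split; [lra|]. exists B. split; [apply sum_over_nonneg; auto|].
  intros w Hw i Hi.
  assert (Hin : In i (seq 0 k)) by (apply in_seq; lia).
  pose proof (sum_over_term _ _ i Hpos Hin).
  assert (Rabs (pderiv i g w - pderiv i g v0) < 1).
  { apply Hq; auto. intros i' Hi'. specialize (Hw i' Hi'). lra. }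
  pose proof (Rabs_triang_inv (pderiv i g w) (pderiv i g v0)). fold B in H. lra.
Qed.

Lemma between_near (a b c x d : R) :
  Rmin a b <= c <= Rmax a b -> Rabs (a - x) <= d -> Rabs (b - x) <= d -> Rabs (c - x) <= d.
Proof.
  unfold Rmin, Rmax, Rabs. intros. repeat destruct Rle_dec; repeat destruct Rcase_abs; lra.
Qed.

Lemma smooth_lipschitz (k : nat) (g : (nat -> R) -> R) (v0 : nat -> R) :
  smooth k g -> exists d, 0 < d /\ exists L, 0 <= L /\
  forall v1 v2, (forall i, (i < k)%nat -> Rabs (v1 i - v0 i) <= d) ->
                (forall i, (i < k)%nat -> Rabs (v2 i - v0 i) <= d) ->
  Rabs (g v1 - g v2) <= L * dist1 (seq 0 k) v1 v2.
Proof.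
  intros Hg. destruct (smooth_pderiv_bounded k g v0 Hg) as [d [Hd [B [HB HpB]]]].
  destruct Hg as [Hdep Hck]. destruct (Hck 1%nat) as [_ H1].
  exists d. split; [exact Hd|]. exists B. split; [exact HB|].
  intros v1 v2 Hv1 Hv2.
  (* move from v1 to v2 one coordinate at a time *)
  set (z := fun m j => if Nat.ltb j m then v2 j else v1 j).
  assert (Hz : forall m, (m <= k)%nat ->
    Rabs (g (z m) - g v1) <= B * dist1 (seq 0 m) v1 v2).
  { induction m as [|m IH]; intros Hm.
    - replace (z O) with v1.
      + rewrite Rminus_diag, Rabs_R0. pose proof (dist1_nonneg (seq 0 0) v1 v2). nra.
      + apply functional_extensionality. intro j. unfold z. destruct (Nat.ltb_spec j 0); auto. lia.
    - assert (Ezs : z (S m) = cupd (z m) m (v2 m)).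
      { apply functional_extensionality. intro j. unfold z, cupd.
        destruct (Nat.eqb_spec j m); destruct (Nat.ltb_spec j (S m));
          destruct (Nat.ltb_spec j m); subst; auto; lia. }
      assert (Ez : cupd (z m) m (v1 m) = z m).
      { replace (v1 m) with (z m m) by (unfold z; destruct (Nat.ltb_spec m m); auto; lia).
        apply cupd_id. }
      assert (Hstep : Rabs (g (z (S m)) - g (z m)) <= B * Rabs (v1 m - v2 m)).
      { replace (g (z m)) with (g (cupd (z m) m (v1 m))) by (rewrite Ez; reflexivity).
        rewrite Ezs, (Rabs_minus_sym (v1 m)).
        apply partial_MVT_bound; [apply (H1 m); lia|].
        intros c Hc. apply HpB; [|lia]. intros i Hi. unfold cupd.
        destruct (Nat.eqb_spec i m) as [->|Him]; [apply between_near with (v1 m) (v2 m); auto|].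
        unfold z. destruct (Nat.ltb i m); auto. }
      unfold dist1. rewrite seq_S, sum_over_app. simpl sum_over. fold (dist1 (seq 0 m) v1 v2).
      replace (g (z (S m)) - g v1) with ((g (z (S m)) - g (z m)) + (g (z m) - g v1)) by ring.
      eapply Rle_trans; [apply Rabs_triang|]. specialize (IH ltac:(lia)). lra. }
  replace (g v2) with (g (z k)).
  - rewrite Rabs_minus_sym. apply Hz. lia.
  - apply Hdep. intros i Hi. unfold z. destruct (Nat.ltb_spec i k); auto. lia.
Qed.

Definition lipschitz_near (J : list nat) (F : (nat -> R) -> R) (u0 : nat -> R) : Prop :=
  exists d, 0 < d /\ exists L, 0 <= L /\
    forall u v, agree_off J u0 u -> agree_off J u0 v -> near_on J d u0 u -> near_on J d u0 v ->
    Rabs (F u - F v) <= L * dist1 J u v.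

Lemma lipschitz_near_ext (J : list nat) (F G : (nat -> R) -> R) (u0 : nat -> R) :
  (forall u, F u = G u) -> lipschitz_near J F u0 -> lipschitz_near J G u0.
Proof.
  intros E [d [Hd [L [HL H]]]]. exists d. split; [exact Hd|]. exists L. split; [exact HL|].
  intros u v Hu Hv Nu Nv. rewrite <- !E. auto.
Qed.

Lemma lipschitz_near_local (J : list nat) (F : (nat -> R) -> R) (u0 : nat -> R) (eta : R) :
  0 < eta -> lipschitz_near J F u0 -> exists d, 0 < d /\ exists L, 0 <= L /\
    forall u v, agree_off J u0 u -> agree_off J u0 v -> near_on J d u0 u -> near_on J d u0 v ->
    Rabs (F u - F v) <= L * dist1 J u v /\ Rabs (F u - F u0) <= eta.
Proof.
  intros Heta [d [Hd [L [HL H]]]].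
  pose proof (pos_INR (length J)) as Hn. set (n := INR (length J)) in *.
  set (d' := Rmin d (eta / (L * n + 1))).
  assert (Hd'1 : d' <= d) by apply Rmin_l.
  assert (Hd'2 : d' <= eta / (L * n + 1)) by apply Rmin_r.
  assert (Hd' : 0 < d') by (apply Rmin_pos; [lra | apply Rdiv_lt_0_compat; nra]).
  exists d'. split; [exact Hd'|]. exists L. split; [exact HL|].
  intros u v Hu Hv Nu Nv. split; [apply H; auto; eapply near_on_mono; eauto|].
  eapply Rle_trans.
  { apply H; auto using agree_off_refl; [eapply near_on_mono; eauto | apply near_on_refl; lra]. }
  pose proof (dist1_near_on J d' u0 u Nu) as Hdist. fold n in Hdist.
  apply Rle_trans with (L * n * (eta / (L * n + 1))); [|apply mult_div_succ_le; nra].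
  rewrite Rmult_assoc. apply Rmult_le_compat_l; [lra|].
  eapply Rle_trans; [exact Hdist|]. apply Rmult_le_compat_l; lra.
Qed.

Lemma lipschitz_near_uniform {A} (As : list A) (F : A -> (nat -> R) -> R) (J : list nat)
    (u0 : nat -> R) (eta : R) :
  0 < eta -> (forall a, In a As -> lipschitz_near J (F a) u0) ->
  exists d, 0 < d /\ exists L, 0 <= L /\
    forall u v, agree_off J u0 u -> agree_off J u0 v -> near_on J d u0 u -> near_on J d u0 v ->
    forall a, In a As -> Rabs (F a u - F a v) <= L * dist1 J u v /\ Rabs (F a u - F a u0) <= eta.
Proof.
  intros Heta. induction As as [|b As IH]; intros HJ.
  - exists 1. split; [lra|]. exists 0. split; [lra|]. intros u v _ _ _ _ a [].
  - destruct (lipschitz_near_local J (F b) u0 eta Heta (HJ b (or_introl eq_refl)))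
      as [db [Hdb [Lb [HLb Hb]]]].
    destruct IH as [dJ [HdJ [LJ [HLJ HJ']]]]; [intros a Ha; apply HJ; right; auto|].
    pose proof (Rmin_l db dJ) as Hm1. pose proof (Rmin_r db dJ) as Hm2.
    exists (Rmin db dJ). split; [apply Rmin_pos; auto|].
    exists (Rmax Lb LJ). split; [eapply Rle_trans; [exact HLb | apply Rmax_l]|].
    intros u v Hu Hv Nu Nv a Ha. pose proof (dist1_nonneg J u v) as Hd0.
    destruct Ha as [<-|Ha].
    + destruct (Hb u v Hu Hv) as [H1 H2]; try (eapply near_on_mono; eauto).
      split; [|exact H2]. eapply Rle_trans; [exact H1|].
      apply Rmult_le_compat_r; [lra | apply Rmax_l].
    + destruct (HJ' u v Hu Hv) with a as [H1 H2]; try (eapply near_on_mono; eauto); auto.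
      split; [|exact H2]. eapply Rle_trans; [exact H1|].
      apply Rmult_le_compat_r; [lra | apply Rmax_r].
Qed.

Lemma lipschitz_near_const (J : list nat) (c : R) (u0 : nat -> R) :
  lipschitz_near J (fun _ => c) u0.
Proof.
  exists 1. split; [lra|]. exists 0. split; [lra|]. intros u v _ _ _ _.
  rewrite Rminus_diag, Rabs_R0. lra.
Qed.

Lemma lipschitz_near_coord (J : list nat) (j : nat) (u0 : nat -> R) :
  lipschitz_near J (fun u => u j) u0.
Proof.
  exists 1. split; [lra|]. exists 1. split; [lra|]. intros u v Hu Hv _ _.
  rewrite Rmult_1_l. destruct (in_dec Nat.eq_dec j J) as [Hj|Hj]; [apply dist1_term; auto|].
  rewrite (Hu j Hj), (Hv j Hj), Rminus_diag, Rabs_R0. apply dist1_nonneg.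
Qed.

Lemma lipschitz_near_plus (J : list nat) (F G : (nat -> R) -> R) (u0 : nat -> R) :
  lipschitz_near J F u0 -> lipschitz_near J G u0 -> lipschitz_near J (fun u => F u + G u) u0.
Proof.
  intros HF HG.
  destruct (lipschitz_near_uniform [true; false] (fun b => if b then F else G) J u0 1 Rlt_0_1)
    as [d [Hd [L [HL H]]]]; [intros [|] _; auto|].
  exists d. split; [exact Hd|]. exists (2 * L). split; [lra|]. intros u v Hu Hv Nu Nv.
  destruct (H u v Hu Hv Nu Nv true) as [H1 _]; [left; auto|].
  destruct (H u v Hu Hv Nu Nv false) as [H2 _]; [right; left; auto|].
  replace (F u + G u - (F v + G v)) with ((F u - F v) + (G u - G v)) by ring.
  eapply Rle_trans; [apply Rabs_triang|]. simpl in H1, H2. lra.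
Qed.

Lemma lipschitz_near_mult (J : list nat) (F G : (nat -> R) -> R) (u0 : nat -> R) :
  lipschitz_near J F u0 -> lipschitz_near J G u0 -> lipschitz_near J (fun u => F u * G u) u0.
Proof.
  intros HF HG.
  destruct (lipschitz_near_uniform [true; false] (fun b => if b then F else G) J u0 1 Rlt_0_1)
    as [d [Hd [L [HL H]]]]; [intros [|] _; auto|].
  pose proof (Rabs_pos (F u0)). pose proof (Rabs_pos (G u0)).
  exists d. split; [exact Hd|]. exists ((Rabs (F u0) + Rabs (G u0) + 2) * L).
  split; [apply Rmult_le_pos; lra|]. intros u v Hu Hv Nu Nv.
  destruct (H u v Hu Hv Nu Nv true) as [HFuv HFu]; [left; auto|].
  destruct (H v u Hv Hu Nv Nu false) as [_ HGv]; [right; left; auto|].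
  destruct (H u v Hu Hv Nu Nv false) as [HGuv _]; [right; left; auto|].
  simpl in *.
  assert (Rabs (F u) <= Rabs (F u0) + 1).
  { pose proof (Rabs_triang_inv (F u) (F u0)). lra. }
  assert (Rabs (G v) <= Rabs (G u0) + 1).
  { pose proof (Rabs_triang_inv (G v) (G u0)). lra. }
  replace (F u * G u - F v * G v) with (F u * (G u - G v) + G v * (F u - F v)) by ring.
  eapply Rle_trans; [apply Rabs_triang|]. rewrite !Rabs_mult.
  pose proof (Rabs_pos (F u)). pose proof (Rabs_pos (G v)). pose proof (dist1_nonneg J u v).
  pose proof (Rabs_pos (G u - G v)). pose proof (Rabs_pos (F u - F v)).
  assert (Rabs (F u) * Rabs (G u - G v) <= (Rabs (F u0) + 1) * (L * dist1 J u v))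
    by (apply Rmult_le_compat; auto).
  assert (Rabs (G v) * Rabs (F u - F v) <= (Rabs (G u0) + 1) * (L * dist1 J u v))
    by (apply Rmult_le_compat; auto).
  nra.
Qed.

Lemma lipschitz_near_smooth_comp (k : nat) (g : (nat -> R) -> R) (A : nat -> (nat -> R) -> R)
    (J : list nat) (u0 : nat -> R) :
  smooth k g -> (forall i, (i < k)%nat -> lipschitz_near J (A i) u0) ->
  lipschitz_near J (fun u => g (fun i => A i u)) u0.
Proof.
  intros Hg HA.
  destruct (smooth_lipschitz k g (fun i => A i u0) Hg) as [dg [Hdg [Lg [HLg Hlip]]]].
  destruct (lipschitz_near_uniform (seq 0 k) A J u0 dg Hdg) as [d [Hd [L [HL H]]]].
  { intros i Hi. apply in_seq in Hi. apply HA. lia. }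
  exists d. split; [exact Hd|]. exists (Lg * (INR k * L)).
  split; [apply Rmult_le_pos; [lra | apply Rmult_le_pos; [apply pos_INR | lra]]|].
  intros u v Hu Hv Nu Nv.
  assert (Hin : forall i, (i < k)%nat -> In i (seq 0 k)) by (intros; apply in_seq; lia).
  eapply Rle_trans.
  { apply Hlip; intros i Hi.
    - apply (H u v Hu Hv Nu Nv i (Hin i Hi)).
    - apply (H v u Hv Hu Nv Nu i (Hin i Hi)). }
  rewrite Rmult_assoc. apply Rmult_le_compat_l; [lra|].
  replace (INR k * L * dist1 J u v) with (INR (length (seq 0 k)) * (L * dist1 J u v))
    by (rewrite length_seq; ring).
  apply sum_over_bound.
  intros i Hi. apply (H u v Hu Hv Nu Nv i Hi).
Qed.

Definition state_of (u : nat -> R) : state :=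
  fun v => match v with Pl j => u j | Df _ => 0 end.

Lemma teval_lipschitz_near {ar} (I : dL_interp ar) (J : list nat) (t : dterm) (u0 : nat -> R) :
  dfree_term t -> wf_term ar t -> lipschitz_near J (fun u => teval I (state_of u) t) u0.
Proof.
  revert u0.
  induction t as [[j|j]|q|a b IHa IHb|a b IHa IHb|s args IH] using dterm_ind_nested;
    intros u0 Hd Hw; simpl in Hd; try contradiction.
  - exact (lipschitz_near_coord J j u0).
  - exact (lipschitz_near_const J (Q2R q) u0).
  - destruct Hd, Hw. exact (lipschitz_near_plus J _ _ u0 (IHa u0 H H1) (IHb u0 H0 H2)).
  - destruct Hd, Hw. exact (lipschitz_near_mult J _ _ u0 (IHa u0 H H1) (IHb u0 H0 H2)).
  - apply (dfree_TFn s args) in Hd. apply wf_TFn in Hw. destruct Hw as [Hlen Hw].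
    apply (lipschitz_near_smooth_comp (ar s) (fn I s)); [apply fn_smooth|].
    intros i Hi. rewrite <- Hlen in Hi.
    apply lipschitz_near_ext with (fun u => teval I (state_of u) (nth i args (TConst 0))).
    + intro u. rewrite nth_indep with (d' := teval I (state_of u) (TConst 0))
        by (rewrite length_map; auto).
      symmetry. apply map_nth.
    + assert (Hin : In (nth i args (TConst 0)) args) by (apply nth_In; auto).
      rewrite Forall_forall in IH, Hd, Hw. auto.
Qed.

(** * Uniqueness of solutions *)

Lemma real_induction (T : R) (P : R -> Prop) :
  P 0 ->
  (forall m, 0 < m <= T -> (forall t, 0 <= t < m -> P t) -> P m) ->
  (forall m, 0 <= m < T -> (forall t, 0 <= t <= m -> P t) ->
     exists m', m < m' <= T /\ forall t, m <= t <= m' -> P t) ->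
  forall t, 0 <= t <= T -> P t.
Proof.
  intros H0 Hclosed Hopen.
  set (E := fun s => 0 <= s <= T /\ forall t, 0 <= t <= s -> P t).
  assert (E0 : forall s, 0 <= s <= T -> s <= 0 -> E s).
  { intros s Hs Hs0. split; [exact Hs|]. intros t Ht. replace t with 0 by lra. exact H0. }
  intros t Ht.
  destruct (completeness E) as [m [Hub Hlub]].
  { exists T. intros s [Hs _]. lra. }
  { exists 0. apply E0; lra. }
  assert (Hm : 0 <= m <= T).
  { split; [apply Hub, E0; lra | apply Hlub; intros s [Hs _]; lra]. }
  assert (Hbelow : forall t, 0 <= t < m -> P t).
  { intros t' Ht'. apply NNPP. intro HP.
    assert (m <= t'); [|lra].
    apply Hlub. intros s [Hs Hs']. destruct (Rle_lt_dec s t'); auto.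
    exfalso. apply HP, Hs'. lra. }
  assert (Em : E m).
  { split; [exact Hm|]. intros t' Ht'.
    destruct (Rle_lt_dec m t') as [Hle|Hlt]; [|apply Hbelow; lra].
    replace t' with m by lra. destruct (Req_dec m 0) as [->|Hne]; [exact H0|].
    apply Hclosed; auto. lra. }
  destruct (Req_dec m T) as [<-|HmT]; [apply Em; lra|].
  destruct (Hopen m ltac:(lra) (proj2 Em)) as [m' [Hm' Hext]].
  assert (m' <= m); [|lra].
  apply Hub. split; [lra|]. intros t' Ht'.
  destruct (Rle_lt_dec t' m); [apply Em; lra | apply Hext; lra].
Qed.

Lemma eq_left_continuous (T m : R) (g1 g2 : R -> R) :
  0 < m <= T -> (forall t, 0 <= t < m -> g1 t = g2 t) ->
  continuous_on_at 0 T g1 m -> continuous_on_at 0 T g2 m -> g1 m = g2 m.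
Proof.
  intros Hm Heq H1 H2. apply Rminus_diag_uniq, Rabs_eq_0.
  apply Rle_antisym; [|apply Rabs_pos]. apply le_epsilon. intros eps Heps.
  destruct (H1 (eps / 2) ltac:(lra)) as [d1 [Hd1 H1']].
  destruct (H2 (eps / 2) ltac:(lra)) as [d2 [Hd2 H2']].
  set (t := Rmax 0 (m - Rmin d1 d2 / 2)).
  pose proof (Rmin_l d1 d2). pose proof (Rmin_r d1 d2). pose proof (Rmin_pos d1 d2 Hd1 Hd2).
  assert (Ht : 0 <= t < m /\ Rabs (t - m) < Rmin d1 d2).
  { unfold t, Rmax. destruct Rle_dec; split; try lra; rewrite Rabs_left1 by lra; lra. }
  specialize (H1' t ltac:(lra) ltac:(lra)). specialize (H2' t ltac:(lra) ltac:(lra)).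
  rewrite Heq in H1' by lra.
  replace (g1 m - g2 m) with (- (g2 t - g1 m) + (g2 t - g2 m)) by ring.
  eapply Rle_trans; [apply Rabs_triang|]. rewrite Rabs_Ropp. lra.
Qed.

Lemma has_deriv_within_diff_bound (T a b K : R) (g1 g2 dg1 dg2 : R -> R) :
  0 <= a <= b -> b <= T ->
  (forall z, 0 <= z <= T ->
     has_deriv_within T g1 z (dg1 z) /\ has_deriv_within T g2 z (dg2 z)) ->
  g1 a = g2 a -> (forall z, a <= z <= b -> Rabs (dg1 z - dg2 z) <= K) ->
  Rabs (g1 b - g2 b) <= K * (b - a).
Proof.
  intros Hab HbT Hder Ha HK.
  replace (g1 b - g2 b) with ((g1 b - g2 b) - (g1 a - g2 a)) by (rewrite Ha; ring).
  apply (MVT_bound (fun s => g1 s - g2 s) (fun s => dg1 s - dg2 s)); [lra | | | exact HK].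
  - intros x Hx. destruct (Hder x ltac:(lra)) as [D1 D2].
    apply has_deriv_within_is_derive in D1; [|lra]. apply has_deriv_within_is_derive in D2; [|lra].
    exact (is_derive_minus _ _ _ _ _ D1 D2).
  - intros x Hx. destruct (Hder x ltac:(lra)) as [D1 D2].
    apply continuous_on_at_minus; eapply continuous_on_at_sub;
      try eapply has_deriv_within_continuous_on_at; eauto; lra.
Qed.

Definition lipschitz_field_near (J : list nat) (F : (nat -> R) -> nat -> R) (u0 : nat -> R) :=
  exists d, 0 < d /\ exists L, 0 <= L /\
    forall u v, agree_off J u0 u -> agree_off J u0 v -> near_on J d u0 u -> near_on J d u0 v ->
    forall j, In j J -> Rabs (F u j - F v j) <= L * dist1 J u v.

Section Uniqueness.

Variables (J : list nat) (F : (nat -> R) -> nat -> R) (u0 : nat -> R) (T : R).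
Variables (X1 X2 : R -> nat -> R).

Hypothesis F_lipschitz : forall us, agree_off J u0 us -> lipschitz_field_near J F us.
Hypothesis X_agree_off : forall z, 0 <= z <= T -> agree_off J u0 (X1 z) /\ agree_off J u0 (X2 z).
Hypothesis X_solve : 0 < T -> forall z, 0 <= z <= T -> forall j, In j J ->
  has_deriv_within T (fun s => X1 s j) z (F (X1 z) j) /\
  has_deriv_within T (fun s => X2 s j) z (F (X2 z) j).

Lemma ode_unique_window (m d L : R) :
  0 <= m < T -> 0 < d -> 0 <= L -> (forall j, In j J -> X1 m j = X2 m j) ->
  exists e, 0 < e /\ m + e <= T /\ INR (length J) * L * e <= 1 / 2 /\
    forall s, m <= s <= m + e -> near_on J d (X1 m) (X1 s) /\ near_on J d (X1 m) (X2 s).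
Proof.
  intros Hm Hd HL Hmeq. assert (HT : 0 < T) by lra.
  destruct (list_delta J (fun j eta => forall s, 0 <= s <= T -> Rabs (s - m) < eta ->
      Rabs (X1 s j - X1 m j) < d /\ Rabs (X2 s j - X2 m j) < d)) as [eta [Heta Hnear]].
  { intros j e e' Hq He' s Hs Hsm. apply Hq; auto. lra. }
  { intros j Hj. destruct (X_solve HT m ltac:(lra) j Hj) as [D1 D2].
    destruct (has_deriv_within_continuous_on_at _ _ _ _ D1 d Hd) as [d1 [Hd1 W1]].
    destruct (has_deriv_within_continuous_on_at _ _ _ _ D2 d Hd) as [d2 [Hd2 W2]].
    exists (Rmin d1 d2). split; [apply Rmin_pos; auto|]. intros s Hs Hsm.
    pose proof (Rmin_l d1 d2). pose proof (Rmin_r d1 d2).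
    split; [apply W1 | apply W2]; auto; lra. }
  pose proof (pos_INR (length J)) as Hn.
  destruct (contraction_window (INR (length J) * L) (Rmin (eta / 2) (T - m)) ltac:(nra)
              ltac:(apply Rmin_pos; lra)) as [e [He [Hea HeL]]].
  pose proof (Rmin_l (eta / 2) (T - m)). pose proof (Rmin_r (eta / 2) (T - m)).
  exists e. split; [exact He|]. split; [lra|]. split; [exact HeL|].
  intros s Hs. split; intros j Hj; destruct (Hnear j Hj s ltac:(lra)) as [A1 A2];
    try (rewrite Rabs_right; lra); [lra | rewrite (Hmeq j Hj); lra].
Qed.

Lemma ode_unique_step (m : R) :
  0 <= m < T -> (forall j, In j J -> X1 m j = X2 m j) ->
  exists m', m < m' <= T /\ forall t, m <= t <= m' -> forall j, In j J -> X1 t j = X2 t j.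
Proof.
  intros Hm Hmeq.
  destruct (F_lipschitz (X1 m) (proj1 (X_agree_off m ltac:(lra))))
    as [d [Hd [L [HL HLip]]]].
  destruct (ode_unique_window m d L Hm Hd HL Hmeq) as [e [He [HeT [HnLe Hclose]]]].
  pose proof (pos_INR (length J)) as Hn. set (n := INR (length J)) in *.
  set (W := fun s => m <= s <= m + e).
  assert (Hagree : forall s, W s -> agree_off J (X1 m) (X1 s) /\ agree_off J (X1 m) (X2 s)).
  { intros s Hs. unfold W in Hs. destruct (X_agree_off m ltac:(lra)) as [A _].
    destruct (X_agree_off s ltac:(lra)) as [A1 A2].
    split; eapply agree_off_trans; eauto. }
  (* the distance of the two solutions on the window is at most half of any bound on it *)
  assert (Hzero : forall s, W s -> dist1 J (X1 s) (X2 s) = 0).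
  { apply halving_bound_eq0 with (2 * n * d).
    - intros; apply dist1_nonneg.
    - intros s Hs. destruct (Hclose s Hs) as [C1 C2].
      eapply Rle_trans; [apply (dist1_triangle J (X1 s) (X1 m) (X2 s))|].
      rewrite (dist1_sym J (X1 m)).
      pose proof (dist1_near_on J d _ _ C1) as N1. pose proof (dist1_near_on J d _ _ C2) as N2.
      fold n in N1, N2. lra.
    - intros B HB s Hs.
      assert (HB0 : 0 <= B) by (eapply Rle_trans; [apply dist1_nonneg | apply HB; exact Hs]).
      unfold W in Hs.
      eapply Rle_trans.
      { apply sum_over_bound with (c := L * B * e). intros j Hj.
        eapply Rle_trans.
        - apply (has_deriv_within_diff_bound T m s (L * B) (fun t => X1 t j) (fun t => X2 t j)
                   (fun t => F (X1 t) j) (fun t => F (X2 t) j)); try lra.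
          + intros z Hz. apply X_solve; auto. lra.
          + apply Hmeq; auto.
          + intros z Hz. assert (Wz : W z) by (unfold W; lra).
            destruct (Hclose z Wz), (Hagree z Wz).
            eapply Rle_trans; [apply HLip; auto|]. apply Rmult_le_compat_l; auto.
        - apply Rmult_le_compat_l; [nra | lra]. }
      fold n. replace (n * (L * B * e)) with (n * L * e * B) by ring. nra. }
  exists (m + e). split; [lra|]. intros t Ht j Hj.
  apply (dist1_eq0 J (X1 t) (X2 t)); [apply Hzero, Ht | exact Hj].
Qed.

Lemma ode_unique :
  (forall j, In j J -> X1 0 j = X2 0 j) ->
  forall z, 0 <= z <= T -> forall j, In j J -> X1 z j = X2 z j.
Proof.
  intros H0. apply (real_induction T (fun t => forall j, In j J -> X1 t j = X2 t j)); auto.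
  - intros m Hm Hbelow j Hj.
    destruct (X_solve ltac:(lra) m ltac:(lra) j Hj) as [D1 D2].
    apply (eq_left_continuous T m (fun s => X1 s j) (fun s => X2 s j) Hm).
    + intros t Ht. apply Hbelow; auto.
    + exact (has_deriv_within_continuous_on_at _ _ _ _ D1).
    + exact (has_deriv_within_continuous_on_at _ _ _ _ D2).
  - intros m Hm Hupto. apply ode_unique_step; auto. apply Hupto. lra.
Qed.

End Uniqueness.

(** * Existence of solutions *)

Lemma ex_RInt_continuous_R (g : R -> R) (a b : R) :
  (forall x, continuous g x) -> ex_RInt g a b.
Proof. intros H. apply (ex_RInt_continuous (V := R_CompleteNormedModule)). intros; apply H. Qed.

Lemma RInt_minus_R (g1 g2 : R -> R) (a b : R) :
  ex_RInt g1 a b -> ex_RInt g2 a b ->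
  @eq R (RInt (fun x => g1 x - g2 x) a b) (RInt g1 a b - RInt g2 a b).
Proof. intros H1 H2. exact (RInt_minus g1 g2 a b H1 H2). Qed.

Lemma RInt_const_R (c b : R) : @eq R (RInt (fun _ => c) 0 b) (b * c).
Proof. rewrite RInt_const. unfold scal; simpl; unfold mult; simpl. ring. Qed.

Lemma is_derive_RInt_0 (g : R -> R) (z : R) :
  (forall x, continuous g x) -> is_derive (fun x => RInt g 0 x) z (g z).
Proof.
  intros H. apply (is_derive_RInt (V := R_CompleteNormedModule) g (fun x => RInt g 0 x) 0 z).
  - exists (mkposreal 1 Rlt_0_1). intros y _.
    apply (RInt_correct (V := R_CompleteNormedModule)), ex_RInt_continuous_R, H.
  - apply H.
Qed.

Lemma RInt_0_abs_le (g : R -> R) (b M : R) :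
  (forall x, continuous g x) -> 0 <= b -> (forall s, 0 <= s <= b -> Rabs (g s) <= M) ->
  Rabs (RInt g 0 b) <= b * M.
Proof.
  intros Hc Hb HM. replace (b * M) with ((b - 0) * M) by ring.
  apply abs_RInt_le_const; auto. apply ex_RInt_continuous_R, Hc.
Qed.

Lemma dist1_continuous (J : list nat) (Y : R -> nat -> R) (t : R) :
  (forall j, In j J -> continuous (fun s => Y s j) t) ->
  forall eps, 0 < eps -> exists d, 0 < d /\
    forall s, Rabs (s - t) < d -> dist1 J (Y s) (Y t) < eps.
Proof.
  intros H eps Heps. pose proof (pos_INR (length J)) as Hn.
  set (e := eps / (INR (length J) + 1)).
  assert (He : 0 < e) by (apply Rdiv_lt_0_compat; lra).
  destruct (list_delta J (fun j d => forall s, Rabs (s - t) < d -> Rabs (Y s j - Y t j) < e))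
    as [d [Hd Hq]].
  { intros j d d' Hq Hd' s Hs. apply Hq. lra. }
  { intros j Hj. apply (continuous_R_iff (fun s => Y s j)); auto. }
  exists d. split; [exact Hd|]. intros s Hs.
  apply Rle_lt_trans with (INR (length J) * e).
  - apply sum_over_bound. intros j Hj. left. apply Hq; auto.
  - unfold e. replace (INR (length J) * (eps / (INR (length J) + 1)))
      with (eps - eps / (INR (length J) + 1)) by (field; lra).
    assert (0 < eps / (INR (length J) + 1)) by (apply Rdiv_lt_0_compat; lra). lra.
Qed.

Lemma lipschitz_comp_continuous (J : list nat) (G : (nat -> R) -> R) (L : R) (Y : R -> nat -> R) :
  0 <= L -> (forall u v, Rabs (G u - G v) <= L * dist1 J u v) ->
  (forall j t, In j J -> continuous (fun s => Y s j) t) ->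
  forall t, continuous (fun s => G (Y s)) t.
Proof.
  intros HL HG HY t. apply continuous_R_iff. intros eps Heps.
  destruct (dist1_continuous J Y t (fun j Hj => HY j t Hj) (eps / (L + 1))) as [d [Hd Hd']].
  { apply Rdiv_lt_0_compat; lra. }
  exists d. split; [exact Hd|]. intros y Hy. eapply Rle_lt_trans; [apply HG|].
  specialize (Hd' y Hy). pose proof (dist1_nonneg J (Y y) (Y t)).
  apply Rle_lt_trans with ((L + 1) * dist1 J (Y y) (Y t)); [nra|].
  replace eps with ((L + 1) * (eps / (L + 1))) by (field; lra).
  apply Rmult_lt_compat_l; lra.
Qed.

Lemma geometric_cauchy_limit (a : nat -> R) (C : R) :
  (forall k i, Rabs (a (k + i)%nat - a k) <= C / 2 ^ k) ->
  {l : R | forall k, Rabs (l - a k) <= C / 2 ^ k}.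
Proof.
  intros Hb.
  assert (Hcau : Cauchy_crit a).
  { intros eps Heps. destruct (halvings_small C (eps / 2) ltac:(lra)) as [N HN]. exists N.
    intros n m Hn Hm. unfold R_dist.
    pose proof (Hb N (n - N)%nat) as H1. pose proof (Hb N (m - N)%nat) as H2.
    replace (N + (n - N))%nat with n in H1 by lia. replace (N + (m - N))%nat with m in H2 by lia.
    replace (a n - a m) with ((a n - a N) - (a m - a N)) by ring.
    eapply Rle_lt_trans; [apply Rabs_triang|]. rewrite Rabs_Ropp. lra. }
  destruct (Rcomplete.R_complete a Hcau) as [l Hl]. exists l. intro k.
  apply Rle_plus_epsilon. intros eps Heps. destruct (Hl eps Heps) as [N HN].
  specialize (HN (N + k)%nat ltac:(lia)). unfold R_dist in HN.
  pose proof (Hb k N) as H1. replace (k + N)%nat with (N + k)%nat in H1 by lia.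
  replace (l - a k) with (- (a (N + k)%nat - l) + (a (N + k)%nat - a k)) by ring.
  eapply Rle_trans; [apply Rabs_triang|]. rewrite Rabs_Ropp. lra.
Qed.

Lemma uniform_limit_continuous (Y : R -> R) (P : nat -> R -> R) (C : R) :
  (forall k t, continuous (P k) t) -> (forall k t, Rabs (Y t - P k t) <= C / 2 ^ k) ->
  forall t, continuous Y t.
Proof.
  intros HP HY t. apply continuous_R_iff. intros eps Heps.
  destruct (halvings_small C (eps / 3) ltac:(lra)) as [k Hk].
  destruct (proj1 (continuous_R_iff _ _) (HP k t) (eps / 3) ltac:(lra)) as [d [Hd Hd']].
  exists d. split; [exact Hd|]. intros y Hy. specialize (Hd' y Hy).
  pose proof (HY k y). pose proof (HY k t).
  replace (Y y - Y t) with ((Y y - P k y) + (P k y - P k t) - (Y t - P k t)) by ring.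
  eapply Rle_lt_trans; [apply Rabs_triang|]. rewrite Rabs_Ropp.
  pose proof (Rabs_triang (Y y - P k y) (P k y - P k t)). lra.
Qed.

Section Picard.

Variables (J : list nat) (G : (nat -> R) -> nat -> R) (u0 : nat -> R) (h L M : R).

Hypothesis G_lipschitz : forall u v j, In j J -> Rabs (G u j - G v j) <= L * dist1 J u v.
Hypothesis G_bounded : forall u j, In j J -> Rabs (G u j) <= M.
Hypothesis M_nonneg : 0 <= M.
Hypothesis L_nonneg : 0 <= L.
Hypothesis h_pos : 0 < h.
Hypothesis h_contract : INR (length J) * L * h <= 1 / 2.

(* Clamping the time to [0, h] makes every iterate continuous on all of R. *)
Fixpoint picard (k : nat) : R -> nat -> R :=
  match k with
  | O => fun _ => u0
  | S k' => fun t j =>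
      if in_dec Nat.eq_dec j J then u0 j + RInt (fun s => G (picard k' s) j) 0 (clamp 0 h t)
      else u0 j
  end.

Lemma picard_off (k : nat) (t : R) (j : nat) : ~ In j J -> picard k t j = u0 j.
Proof. intros Hj. destruct k; simpl; auto. destruct in_dec; tauto. Qed.

Lemma picard_S_in (k : nat) (t : R) (j : nat) : In j J ->
  picard (S k) t j = u0 j + RInt (fun s => G (picard k s) j) 0 (clamp 0 h t).
Proof. intros Hj. simpl. destruct in_dec; tauto. Qed.

Lemma picard_at_0 (k : nat) (j : nat) : picard k 0 j = u0 j.
Proof.
  destruct k as [|k]; [reflexivity|].
  destruct (in_dec Nat.eq_dec j J) as [Hj|Hj]; [|apply picard_off; auto].
  rewrite picard_S_in, clamp_id by (auto; lra).
  rewrite RInt_point. apply Rplus_0_r.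
Qed.

Lemma field_comp_continuous (Y : R -> nat -> R) (j : nat) :
  In j J -> (forall j t, continuous (fun s => Y s j) t) ->
  forall t, continuous (fun s => G (Y s) j) t.
Proof.
  intros Hj HY. apply (lipschitz_comp_continuous J (fun u => G u j) L Y); auto.
Qed.

Lemma picard_continuous (k : nat) : forall j t, continuous (fun s => picard k s j) t.
Proof.
  induction k as [|k IH]; intros j t; [apply continuous_const|].
  destruct (in_dec Nat.eq_dec j J) as [Hj|Hj].
  - apply (continuous_ext (fun s => u0 j + RInt (fun s => G (picard k s) j) 0 (clamp 0 h s)));
      [intro; symmetry; apply picard_S_in; auto|].
    apply (continuous_plus (fun _ => u0 j)); [apply continuous_const|].
    apply (continuous_comp (clamp 0 h) (fun x => RInt (fun s => G (picard k s) j) 0 x));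
      [apply continuous_clamp; lra|].
    eapply is_derive_continuous, is_derive_RInt_0, field_comp_continuous; auto.
  - apply (continuous_ext (fun _ => u0 j)); [intro; symmetry; apply picard_off; auto|].
    apply continuous_const.
Qed.

Lemma RInt_field_diff_bound (Y1 Y2 : R -> nat -> R) (t B : R) (j : nat) :
  In j J -> (forall j t, continuous (fun s => Y1 s j) t) ->
  (forall j t, continuous (fun s => Y2 s j) t) ->
  (forall s j, In j J -> Rabs (Y1 s j - Y2 s j) <= B) ->
  Rabs (RInt (fun s => G (Y1 s) j) 0 (clamp 0 h t) - RInt (fun s => G (Y2 s) j) 0 (clamp 0 h t))
    <= INR (length J) * L * h * B.
Proof.
  intros Hj H1 H2 HB.
  assert (HB0 : 0 <= INR (length J) * B).
  { rewrite <- (Rmult_0_r (INR (length J))). destruct J as [|j0 J'] eqn:ES; [simpl; lra|].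
    apply Rmult_le_compat_l; [apply pos_INR|].
    eapply Rle_trans; [apply Rabs_pos | apply (HB 0 j0); left; auto]. }
  pose proof (clamp_in 0 h t ltac:(lra)).
  rewrite <- RInt_minus_R by (apply ex_RInt_continuous_R, field_comp_continuous; auto).
  eapply Rle_trans.
  - apply RInt_0_abs_le with (M := L * (INR (length J) * B)); [|lra|].
    + intro x. apply (continuous_minus (fun s => G (Y1 s) j) (fun s => G (Y2 s) j));
        apply field_comp_continuous; auto.
    + intros s _. eapply Rle_trans; [apply G_lipschitz; auto|].
      apply Rmult_le_compat_l; [lra|]. apply sum_over_bound. intros; apply HB; auto.
  - replace (INR (length J) * L * h * B) with (h * (L * (INR (length J) * B))) by ring.
    apply Rmult_le_compat_r; [apply Rmult_le_pos|]; lra.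
Qed.

Lemma picard_step (k : nat) (t : R) (j : nat) :
  Rabs (picard (S k) t j - picard k t j) <= M * h / 2 ^ k.
Proof.
  assert (Hp : forall k, 0 < 2 ^ k) by (intro; apply pow_lt; lra).
  assert (H0 : forall k, 0 <= M * h / 2 ^ k) by (intro; apply Rdiv_le_0_compat; [nra | auto]).
  revert t j. induction k as [|k IH]; intros t j;
    (destruct (in_dec Nat.eq_dec j J) as [Hj|Hj];
     [|rewrite !picard_off, Rminus_diag, Rabs_R0; auto]).
  - rewrite picard_S_in by auto. simpl picard.
    rewrite Rplus_minus_l, RInt_const_R, Rabs_mult, pow_O, Rdiv_1_r.
    pose proof (clamp_in 0 h t ltac:(lra)). rewrite Rabs_right by lra.
    pose proof (G_bounded u0 j Hj). pose proof (Rabs_pos (G u0 j)).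
    rewrite (Rmult_comm M h). apply Rmult_le_compat; lra.
  - rewrite !picard_S_in, Rminus_plus_l_l by auto.
    eapply Rle_trans.
    { apply RInt_field_diff_bound with (B := M * h / 2 ^ k); auto using picard_continuous. }
    replace (M * h / 2 ^ S k) with (1 / 2 * (M * h / 2 ^ k))
      by (simpl; field; apply Rgt_not_eq, Hp).
    apply Rmult_le_compat_r; auto.
Qed.

Lemma picard_cauchy (t : R) (j : nat) (k i : nat) :
  Rabs (picard (k + i) t j - picard k t j) <= 2 * M * h / 2 ^ k.
Proof.
  assert (Hp : forall k, 0 < 2 ^ k) by (intro; apply pow_lt; lra).
  enough (Rabs (picard (k + i) t j - picard k t j) <= 2 * M * h / 2 ^ k - 2 * M * h / 2 ^ (k + i)).
  { assert (0 <= 2 * M * h / 2 ^ (k + i)) by (apply Rdiv_le_0_compat; [nra | auto]). lra. }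
  induction i as [|i IH].
  - rewrite Nat.add_0_r, !Rminus_diag, Rabs_R0. lra.
  - rewrite Nat.add_succ_r.
    pose proof (picard_step (k + i) t j) as Hs.
    replace (picard (S (k + i)) t j - picard k t j)
      with ((picard (S (k + i)) t j - picard (k + i) t j)
            + (picard (k + i) t j - picard k t j)) by ring.
    eapply Rle_trans; [apply Rabs_triang|].
    replace (2 * M * h / 2 ^ S (k + i)) with (M * h / 2 ^ (k + i))
      by (simpl; field; apply Rgt_not_eq, Hp).
    replace (2 * M * h / 2 ^ (k + i)) with (2 * (M * h / 2 ^ (k + i))) in IH
      by (field; apply Rgt_not_eq, Hp).
    lra.
Qed.

Lemma picard_limit : exists Y : R -> nat -> R,
  (forall t j, ~ In j J -> Y t j = u0 j) /\
  (forall j, Y 0 j = u0 j) /\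
  (forall j t, continuous (fun s => Y s j) t) /\
  (forall t j, In j J -> Y t j = u0 j + RInt (fun s => G (Y s) j) 0 (clamp 0 h t)).
Proof.
  set (C := 2 * M * h).
  assert (HC : 0 <= C) by (unfold C; nra).
  assert (Hdiv : forall k, 0 <= C / 2 ^ k)
    by (intro; apply Rdiv_le_0_compat; [lra | apply pow_lt; lra]).
  set (Y := fun t j => proj1_sig (geometric_cauchy_limit (fun k => picard k t j) C
                                    (picard_cauchy t j))).
  assert (HY : forall t j k, Rabs (Y t j - picard k t j) <= C / 2 ^ k).
  { intros t j k. unfold Y. destruct geometric_cauchy_limit as [l Hl]. apply Hl. }
  assert (Hlim : forall t j c, (forall k, Rabs (c - picard k t j) <= C / 2 ^ k) -> Y t j = c).
  { intros t j c Hc. apply Rminus_diag_uniq, Rabs_eq_0, le_halvings_eq0 with (2 * C);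
      [apply Rabs_pos|]. intro k.
    replace (Y t j - c) with ((Y t j - picard k t j) - (c - picard k t j)) by ring.
    eapply Rle_trans; [apply Rabs_triang|]. rewrite Rabs_Ropp.
    pose proof (HY t j k). pose proof (Hc k). lra. }
  assert (Hcont : forall j t, continuous (fun s => Y s j) t).
  { intros j. apply (uniform_limit_continuous (fun s => Y s j) (fun k s => picard k s j) C).
    - intros k. apply picard_continuous.
    - intros k t. apply HY. }
  exists Y. split; [|split; [|split]].
  - intros t j Hj. apply Hlim. intro k. rewrite picard_off, Rminus_diag, Rabs_R0 by auto.
    apply Hdiv.
  - intros j. apply Hlim. intro k. rewrite picard_at_0, Rminus_diag, Rabs_R0. apply Hdiv.
  - exact Hcont.
  - intros t j Hj. apply Hlim. intros [|k].
    + simpl picard. rewrite Rplus_minus_l. pose proof (clamp_in 0 h t ltac:(lra)).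
      eapply Rle_trans.
      { apply RInt_0_abs_le with (M := M); [apply field_comp_continuous; auto | lra |].
        intros; apply G_bounded; auto. }
      unfold C. rewrite pow_O, Rdiv_1_r. nra.
    + rewrite picard_S_in, Rminus_plus_l_l by auto.
      eapply Rle_trans.
      { apply RInt_field_diff_bound with (B := C / 2 ^ k); auto using picard_continuous. }
      pose proof (Hdiv k).
      replace (C / 2 ^ S k) with (1 / 2 * (C / 2 ^ k))
        by (simpl; field; apply pow_nonzero; lra).
      apply Rmult_le_compat_r; auto.
Qed.

End Picard.

Definition clamp_vec (J : list nat) (u0 : nat -> R) (d : R) (u : nat -> R) : nat -> R :=
  fun j => if in_dec Nat.eq_dec j J then clamp (u0 j - d) (u0 j + d) (u j) else u0 j.

Lemma clamp_vec_agree_off (J : list nat) (u0 : nat -> R) (d : R) (u : nat -> R) :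
  agree_off J u0 (clamp_vec J u0 d u).
Proof. intros j Hj. unfold clamp_vec. destruct in_dec; tauto. Qed.

Lemma clamp_vec_near_on (J : list nat) (u0 : nat -> R) (d : R) (u : nat -> R) :
  0 <= d -> near_on J d u0 (clamp_vec J u0 d u).
Proof.
  intros Hd j Hj. unfold clamp_vec. destruct in_dec; [|tauto].
  pose proof (clamp_in (u0 j - d) (u0 j + d) (u j) ltac:(lra)). apply Rabs_le. lra.
Qed.

Lemma clamp_vec_dist1 (J : list nat) (u0 : nat -> R) (d : R) (u v : nat -> R) :
  0 <= d -> dist1 J (clamp_vec J u0 d u) (clamp_vec J u0 d v) <= dist1 J u v.
Proof.
  intros Hd. apply sum_over_le. intros j Hj. unfold clamp_vec. destruct in_dec; [|tauto].
  apply clamp_lipschitz. lra.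
Qed.

Lemma clamp_vec_id (J : list nat) (u0 : nat -> R) (d : R) (u : nat -> R) :
  agree_off J u0 u -> near_on J d u0 u -> clamp_vec J u0 d u = u.
Proof.
  intros Ha Hn. apply functional_extensionality. intro j. unfold clamp_vec.
  destruct in_dec as [Hj|Hj]; [|rewrite Ha; auto].
  specialize (Hn j Hj). apply Rabs_le_between in Hn. apply clamp_id. lra.
Qed.

Section LocalExistence.

Variables (J : list nat) (F : (nat -> R) -> nat -> R) (u0 : nat -> R) (d L : R).

Hypothesis d_pos : 0 < d.
Hypothesis L_nonneg : 0 <= L.
Hypothesis F_lipschitz : forall u v, agree_off J u0 u -> agree_off J u0 v ->
  near_on J d u0 u -> near_on J d u0 v ->
  forall j, In j J -> Rabs (F u j - F v j) <= L * dist1 J u v.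

Lemma field_near_bound (u : nat -> R) (j : nat) :
  agree_off J u0 u -> near_on J d u0 u -> In j J ->
  Rabs (F u j - F u0 j) <= L * (INR (length J) * d).
Proof.
  intros Hu Nu Hj. eapply Rle_trans.
  - apply F_lipschitz; auto using agree_off_refl. apply near_on_refl. lra.
  - apply Rmult_le_compat_l; auto. apply dist1_near_on; auto.
Qed.

(* Picard iteration needs a globally Lipschitz and bounded field; clamping into the [d]-box
   around [u0] gives one that agrees with [F] on that box. *)
Definition clamped_field (u : nat -> R) : nat -> R := F (clamp_vec J u0 d u).

Definition clamped_field_bound : R :=
  sum_over J (fun j => Rabs (F u0 j)) + L * (INR (length J) * d).

Lemma clamped_field_lipschitz (u v : nat -> R) (j : nat) :
  In j J -> Rabs (clamped_field u j - clamped_field v j) <= L * dist1 J u v.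
Proof.
  intros Hj. unfold clamped_field. eapply Rle_trans.
  - apply F_lipschitz; try apply clamp_vec_agree_off; try (apply clamp_vec_near_on; lra).
    exact Hj.
  - apply Rmult_le_compat_l; auto. apply clamp_vec_dist1. lra.
Qed.

Lemma clamped_field_bounded (u : nat -> R) (j : nat) :
  In j J -> Rabs (clamped_field u j) <= clamped_field_bound.
Proof.
  intros Hj. unfold clamped_field, clamped_field_bound.
  pose proof (field_near_bound (clamp_vec J u0 d u) j (clamp_vec_agree_off _ _ _ _)
                (clamp_vec_near_on J u0 d u ltac:(lra)) Hj).
  pose proof (sum_over_term J (fun j => Rabs (F u0 j)) j (fun j _ => Rabs_pos _) Hj).
  pose proof (Rabs_triang_inv (F (clamp_vec J u0 d u) j) (F u0 j)). simpl in *. lra.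
Qed.

Lemma clamped_field_bound_nonneg : 0 <= clamped_field_bound.
Proof.
  unfold clamped_field_bound. pose proof (pos_INR (length J)).
  pose proof (sum_over_nonneg J (fun j => Rabs (F u0 j)) (fun j _ => Rabs_pos _)).
  assert (0 <= L * (INR (length J) * d)) by (apply Rmult_le_pos; nra). lra.
Qed.

Lemma ode_local_existence :
  exists h, 0 < h /\ exists Y : R -> nat -> R,
    (forall t, agree_off J u0 (Y t)) /\
    (forall t, near_on J d u0 (Y t)) /\
    (forall j, Y 0 j = u0 j) /\
    (forall z, 0 <= z <= h -> forall j, In j J ->
       has_deriv_within h (fun s => Y s j) z (F (Y z) j)) /\
    (forall j, In j J -> Rabs (Y h j - u0 j - h * F u0 j) <= h * (L * (INR (length J) * d))).
Proof.
  set (G := clamped_field). set (M := clamped_field_bound).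
  pose proof clamped_field_bound_nonneg as HM0. fold M in HM0.
  pose proof (pos_INR (length J)) as Hn.
  destruct (contraction_window (INR (length J) * L) (d / (M + 1)) ltac:(nra)
              ltac:(apply Rdiv_lt_0_compat; lra)) as [h [Hh [HhM HnLh]]].
  assert (HhMd : h * M <= d).
  { apply Rle_trans with (M * (d / (M + 1))); [rewrite Rmult_comm; apply Rmult_le_compat_l; lra|].
    apply mult_div_succ_le; lra. }
  destruct (picard_limit J G u0 h L M clamped_field_lipschitz clamped_field_bounded HM0
              L_nonneg Hh HnLh)
    as [Y [Yoff [Y0 [Ycont Yint]]]].
  assert (CG : forall j, In j J -> forall t, continuous (fun s => G (Y s) j) t).
  { intros j Hj. apply (field_comp_continuous J G L); auto. apply clamped_field_lipschitz. }
  assert (Ynear : forall t, near_on J d u0 (Y t)).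
  { intros t j Hj. rewrite (Yint t j Hj), Rplus_minus_l.
    pose proof (clamp_in 0 h t ltac:(lra)).
    eapply Rle_trans.
    { apply RInt_0_abs_le with (M := M); [apply CG, Hj | lra |].
      intros; apply clamped_field_bounded, Hj. }
    apply Rle_trans with (h * M); auto. apply Rmult_le_compat_r; lra. }
  assert (YG : forall s j, G (Y s) j = F (Y s) j).
  { intros s j. unfold G, clamped_field.
    rewrite clamp_vec_id; [reflexivity | exact (Yoff s) | exact (Ynear s)]. }
  exists h. split; [exact Hh|]. exists Y. split; [exact Yoff|]. split; [exact Ynear|].
  split; [exact Y0|]. split.
  - intros z Hz j Hj. rewrite <- YG.
    apply has_deriv_within_ext with (fun x => u0 j + RInt (fun s => G (Y s) j) 0 x); auto.
    + intros s Hs. rewrite (Yint s j Hj), clamp_id; auto.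
    + apply is_derive_has_deriv_within.
      rewrite <- (Rplus_0_l (G (Y z) j)).
      apply (is_derive_plus (fun _ => u0 j)); [exact (is_derive_const (u0 j) z)|].
      apply is_derive_RInt_0, CG, Hj.
  - intros j Hj. rewrite (Yint h j Hj), clamp_id, Rplus_minus_l by lra.
    rewrite <- (RInt_const_R (F u0 j) h).
    rewrite <- RInt_minus_R
      by (apply ex_RInt_continuous_R; auto; intro; apply continuous_const).
    apply RInt_0_abs_le; [| lra |].
    + intro x. apply (continuous_minus (fun s => G (Y s) j) (fun _ => F u0 j));
        [apply CG, Hj | apply continuous_const].
    + intros s _. rewrite YG. apply field_near_bound; [exact (Yoff s) | exact (Ynear s) | exact Hj].
Qed.

End LocalExistence.

Lemma Forall2_nth_iff {A B} (P : A -> B -> Prop) (l1 : list A) (l2 : list B) (d1 : A) (d2 : B) :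
  Forall2 P l1 l2 <->
  length l1 = length l2 /\ forall k, (k < length l1)%nat -> P (nth k l1 d1) (nth k l2 d2).
Proof.
  revert l2. induction l1 as [|a l1 IH]; intros [|b l2]; simpl.
  - split; [intros; split; auto; intros; lia | constructor].
  - split; [intro H; inversion H | intros [H _]; discriminate].
  - split; [intro H; inversion H | intros [H _]; discriminate].
  - rewrite Forall2_cons_iff, IH. split.
    + intros [Hab [Hl Hk]]. split; [auto|]. intros [|k] Hk'; [auto | apply Hk; lia].
    + intros [Hl Hk]. split; [apply (Hk O); lia|]. split; [lia|].
      intros k Hk'. apply (Hk (S k)). lia.
Qed.

Lemma lookup_nth (l1 l2 : list nat) (k : nat) :
  NoDup l1 -> length l2 = length l1 -> (k < length l1)%nat ->
  lookup l1 l2 (nth k l1 O) = nth k l2 O.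
Proof.
  revert l2 k. induction l1 as [|a l1 IH]; intros [|b l2] k Hnd Hl Hk; simpl in *; try lia.
  inversion Hnd as [|? ? Ha Hnd']; subst. destruct k as [|k]; [rewrite Nat.eqb_refl; auto|].
  destruct (Nat.eqb_spec (nth k l1 O) a) as [E|E].
  - exfalso. apply Ha. rewrite <- E. apply nth_In. lia.
  - apply IH; auto; lia.
Qed.

Lemma lookup_notin (l1 l2 : list nat) (j : nat) : ~ In j l1 -> lookup l1 l2 j = j.
Proof.
  revert l2. induction l1 as [|a l1 IH]; intros [|b l2] H; simpl; auto.
  destruct (Nat.eqb_spec j a); [exfalso; apply H; left; auto|].
  apply IH. intro; apply H; right; auto.
Qed.

Lemma fsat_vec_eq {ar} (I : dL_interp ar) (w : state) (xs ys : list nat) :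
  length xs = length ys ->
  (fsat I w (vec_eq xs ys) <->
   forall k, (k < length xs)%nat -> w (Pl (nth k xs O)) = w (Pl (nth k ys O))).
Proof.
  revert ys. induction xs as [|x xs IH]; intros [|y ys] Hl; simpl in *; try lia.
  - split; intros; [lia | reflexivity].
  - rewrite IH by lia. split.
    + intros [H1 H2] [|k] Hk; [auto | apply H2; lia].
    + intros H. split; [apply (H O); lia|]. intros k Hk. apply (H (S k)). lia.
Qed.

Lemma fsat_FIff {ar} (I : dL_interp ar) (w : state) (A B : fml) :
  fsat I w (FIff A B) <-> (fsat I w A <-> fsat I w B).
Proof.
  unfold FIff, FImp. simpl. split; intro H; [tauto|].
  destruct (classic (fsat I w A)); destruct (classic (fsat I w B)); tauto.
Qed.

Lemma fsat_FImp {ar} (I : dL_interp ar) (w : state) (A B : fml) :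
  fsat I w (FImp A B) <-> (fsat I w A -> fsat I w B).
Proof. unfold FImp. simpl. split; intro H; [tauto|]. destruct (classic (fsat I w A)); tauto. Qed.

Definition is_run {ar} (I : dL_interp ar) (o : ode) (w : state) (T : R) (phi : R -> state) :=
  0 <= T /\
  (forall v, ~ (exists i, In i (ovars o) /\ v = Df i) -> phi 0 v = w v) /\
  forall z, 0 <= z <= T ->
    Forall2 (fun i t => phi z (Df i) = teval I (phi z) t) (ovars o) (orhs o) /\
    sf_sat I (phi z) (odom o) /\
    (forall v, ~ (exists i, In i (ovars o) /\ (v = Pl i \/ v = Df i)) -> phi z v = phi 0 v) /\
    (0 < T -> forall i, In i (ovars o) ->
       has_deriv_within T (fun s => phi s (Pl i)) z (phi z (Df i))).

Lemma ode_rel_is_run {ar} (I : dL_interp ar) (o : ode) (w nu : state) :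
  ode_rel I o w nu <-> exists T phi, is_run I o w T phi /\ phi T = nu.
Proof.
  unfold ode_rel, is_run. split.
  - intros [T [phi [H1 [H2 [H3 H4]]]]]. exists T, phi. tauto.
  - intros [T [phi [[H1 [H2 H4]] H3]]]. exists T, phi. tauto.
Qed.

Section Runs.

Context {ar : nat -> nat} (I : dL_interp ar) (o : ode) (w : state) (T : R) (phi : R -> state).
Hypothesis phi_run : is_run I o w T phi.

Lemma run_nonneg : 0 <= T.
Proof. apply phi_run. Qed.

Lemma run_init_Pl (j : nat) : phi 0 (Pl j) = w (Pl j).
Proof. apply phi_run. intros [i [_ E]]. discriminate. Qed.

Lemma run_Pl_off (z : R) (j : nat) :
  0 <= z <= T -> ~ In j (ovars o) -> phi z (Pl j) = w (Pl j).
Proof.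
  intros Hz Hj. destruct phi_run as [_ [_ Hphi]]. destruct (Hphi z Hz) as [_ [_ [Hoff _]]].
  rewrite Hoff, run_init_Pl; [reflexivity|].
  intros [i [Hi [E|E]]]; inversion E; subst; auto.
Qed.

Lemma run_Df_off (z : R) (j : nat) :
  0 <= z <= T -> ~ In j (ovars o) -> phi z (Df j) = w (Df j).
Proof.
  intros Hz Hj. destruct phi_run as [_ [Hinit Hphi]]. destruct (Hphi z Hz) as [_ [_ [Hoff _]]].
  rewrite Hoff; [apply Hinit|]; intros [i [Hi E]]; [|destruct E as [E|E]];
    inversion E; subst; auto.
Qed.

Lemma run_rhs (z : R) (k : nat) :
  0 <= z <= T -> (k < length (ovars o))%nat ->
  phi z (Df (nth k (ovars o) O)) = teval I (phi z) (nth k (orhs o) (TConst 0)).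
Proof.
  intros Hz Hk. destruct phi_run as [_ [_ Hphi]]. destruct (Hphi z Hz) as [HF _].
  apply (Forall2_nth_iff _ _ _ O (TConst 0)) in HF. apply HF, Hk.
Qed.

Lemma run_dom (z : R) : 0 <= z <= T -> sf_sat I (phi z) (odom o).
Proof. intros Hz. apply phi_run, Hz. Qed.

Lemma run_deriv (z : R) (i : nat) : 0 <= z <= T -> 0 < T -> In i (ovars o) ->
  has_deriv_within T (fun s => phi s (Pl i)) z (phi z (Df i)).
Proof. intros Hz HT Hi. apply phi_run; auto. Qed.

End Runs.

Lemma is_run_change_dom {ar} (I : dL_interp ar) (xs : list nat) (f : list dterm) (Q Q' : sform)
    (w : state) (T : R) (phi : R -> state) :
  is_run I (mkODE xs f Q) w T phi -> (forall z, 0 <= z <= T -> sf_sat I (phi z) Q') ->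
  is_run I (mkODE xs f Q') w T phi.
Proof.
  intros [H0 [Hi Hz]] HQ. split; auto. split; auto. intros z Hzz.
  destruct (Hz z Hzz) as [A [B [C D]]]. simpl in *. auto.
Qed.

Section Reversal.

Context {ar : nat -> nat} (I : dL_interp ar) (xs ys : list nat) (w : state) (T : R)
  (psi : R -> state).
Hypothesis ys_nodup : NoDup ys.
Hypothesis ys_length : length ys = length xs.

(* the ys retrace the xs of psi backwards in time; everything else stays as in w *)
Definition reversed_run (s : R) : state := fun v =>
  match v with
  | Pl j => if in_dec Nat.eq_dec j ys then psi (T - s) (Pl (lookup ys xs j)) else w (Pl j)
  | Df j => if in_dec Nat.eq_dec j ys then - psi (T - s) (Df (lookup ys xs j)) else w (Df j)
  end.

Lemma reversed_run_ys (s : R) (k : nat) : (k < length xs)%nat ->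
  reversed_run s (Pl (nth k ys O)) = psi (T - s) (Pl (nth k xs O)) /\
  reversed_run s (Df (nth k ys O)) = - psi (T - s) (Df (nth k xs O)).
Proof.
  intros Hk. simpl. destruct in_dec as [_|Hn]; [rewrite lookup_nth by (auto; lia); auto|].
  exfalso. apply Hn, nth_In. lia.
Qed.

Lemma reversed_run_off (s : R) v :
  ~ (exists i, In i ys /\ (v = Pl i \/ v = Df i)) -> reversed_run s v = w v.
Proof. intros Hv. destruct v as [j|j]; simpl; destruct in_dec; auto; exfalso; apply Hv; eauto. Qed.

Lemma run_reverse (fx fy : list dterm) (Qx Qy : sform) :
  (forall j, In j ys -> ~ In j xs) -> length fy = length xs ->
  is_run I (mkODE xs fx Qx) w T psi -> fsat I (psi T) (vec_eq xs ys) ->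
  (forall s1 s2 : state,
     (forall j, s1 (Pl j) =
        if in_dec Nat.eq_dec j ys then s2 (Pl (lookup ys xs j)) else w (Pl j)) ->
     (forall j, ~ In j xs -> s2 (Pl j) = w (Pl j)) ->
     (forall k, (k < length xs)%nat ->
        teval I s1 (nth k fy (TConst 0)) = - teval I s2 (nth k fx (TConst 0))) /\
     (sf_sat I s1 Qy <-> sf_sat I s2 Qx)) ->
  is_run I (mkODE ys fy Qy) w T reversed_run /\ fsat I (reversed_run T) (vec_eq ys xs).
Proof.
  intros Hdisj Hlf Hrun Hend Hcompat.
  pose proof (run_nonneg I _ w T psi Hrun) as HT.
  assert (Hnx : forall k, (k < length xs)%nat -> In (nth k xs O) xs) by (intros; apply nth_In; lia).
  assert (Hpsi_off : forall z j, 0 <= z <= T -> ~ In j xs -> psi z (Pl j) = w (Pl j))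
    by (intros; apply (run_Pl_off I _ w T psi Hrun); auto).
  rewrite fsat_vec_eq in Hend by lia.
  assert (Hcomp : forall z, 0 <= z <= T ->
     (forall k, (k < length xs)%nat -> teval I (reversed_run z) (nth k fy (TConst 0))
                                      = - teval I (psi (T - z)) (nth k fx (TConst 0))) /\
     (sf_sat I (reversed_run z) Qy <-> sf_sat I (psi (T - z)) Qx)).
  { intros z Hz. apply Hcompat; [reflexivity|]. intros j Hj. apply Hpsi_off; auto. lra. }
  split.
  - split; [exact HT|]. split.
    + intros [j|j] Hv.
      * destruct (in_dec Nat.eq_dec j ys) as [Hj|Hj];
          [|apply reversed_run_off; intros [i [Hi [E|E]]]; inversion E; subst; auto].
        destruct (In_nth ys j O Hj) as [k [Hk <-]].
        rewrite (proj1 (reversed_run_ys 0 k ltac:(lia))), Rminus_0_r, (Hend k) by lia.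
        apply Hpsi_off; [lra | apply Hdisj; auto].
      * apply reversed_run_off. intros [i [Hi [E|E]]]; inversion E; subst. apply Hv. eauto.
    + intros z Hz. simpl ovars; simpl orhs; simpl odom. split; [|split; [|split]].
      * apply (Forall2_nth_iff _ _ _ O (TConst 0)). split; [lia|].
        intros k Hk. rewrite (proj1 (Hcomp z Hz) k), (proj2 (reversed_run_ys z k ltac:(lia)))
          by lia.
        pose proof (run_rhs I _ w T psi Hrun (T - z) k ltac:(lra) ltac:(simpl; lia)) as Hrhs.
        simpl in Hrhs. rewrite Hrhs. reflexivity.
      * apply (proj2 (Hcomp z Hz)), (run_dom I _ w T psi Hrun). lra.
      * intros v Hv. rewrite !reversed_run_off; auto.
      * intros HT' i Hi. destruct (In_nth ys i O Hi) as [k [Hk <-]].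
        rewrite (proj2 (reversed_run_ys z k ltac:(lia))).
        apply has_deriv_within_ext with (fun s => psi (T - s) (Pl (nth k xs O))); [| lra |].
        { intros s _. symmetry. apply reversed_run_ys. lia. }
        pose proof (has_deriv_within_reverse T (fun s => psi s (Pl (nth k xs O))) (T - z)
                      (psi (T - z) (Df (nth k xs O)))) as Hr.
        replace (T - (T - z)) with z in Hr by ring. apply Hr.
        apply (run_deriv I _ w T psi Hrun); [lra | exact HT' | apply Hnx; lia].
  - apply fsat_vec_eq; [lia|]. intros k Hk.
    rewrite (proj1 (reversed_run_ys T k ltac:(lia))), Rminus_diag, run_init_Pl with (1 := Hrun).
    simpl. destruct in_dec as [Hin|]; [|reflexivity].
    exfalso. apply (Hdisj _ Hin), Hnx. lia.
Qed.

End Reversal.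

Fixpoint ode_rhs (xs : list nat) (f : list dterm) (j : nat) : dterm :=
  match xs, f with
  | x :: xs', t :: f' => if Nat.eqb j x then t else ode_rhs xs' f' j
  | _, _ => TConst 0
  end.

Lemma ode_rhs_nth (xs : list nat) (f : list dterm) (k : nat) :
  NoDup xs -> length f = length xs -> (k < length xs)%nat ->
  ode_rhs xs f (nth k xs O) = nth k f (TConst 0).
Proof.
  revert f k. induction xs as [|x xs IH]; intros [|t f] k Hnd Hl Hk; simpl in *; try lia.
  inversion Hnd as [|? ? Hx Hnd']; subst. destruct k as [|k]; [rewrite Nat.eqb_refl; auto|].
  destruct (Nat.eqb_spec (nth k xs O) x) as [E|E].
  - exfalso. apply Hx. rewrite <- E. apply nth_In. lia.
  - apply IH; auto; lia.
Qed.

Lemma ode_rhs_In (xs : list nat) (f : list dterm) (j : nat) :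
  length f = length xs -> In j xs -> In (ode_rhs xs f j) f.
Proof.
  revert f. induction xs as [|x xs IH]; intros [|t f] Hl Hj; simpl in *; try lia; try contradiction.
  destruct (Nat.eqb_spec j x); [auto|]. right. apply IH; [lia|]. destruct Hj; congruence.
Qed.

Definition ode_field {ar} (I : dL_interp ar) (xs : list nat) (f : list dterm)
    (u : nat -> R) (j : nat) : R :=
  teval I (state_of u) (ode_rhs xs f j).

Section OdeField.

Context {ar : nat -> nat} (I : dL_interp ar) (xs : list nat) (f : list dterm).
Hypothesis xs_nodup : NoDup xs.
Hypothesis f_length : length f = length xs.
Hypothesis f_dfree : Forall dfree_term f.
Hypothesis f_wf : Forall (wf_term ar) f.

Lemma ode_field_lipschitz (us : nat -> R) : lipschitz_field_near xs (ode_field I xs f) us.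
Proof.
  destruct (lipschitz_near_uniform xs (fun j u => ode_field I xs f u j) xs us 1 Rlt_0_1)
    as [d [Hd [L [HL H]]]].
  { intros j Hj. pose proof (ode_rhs_In xs f j f_length Hj) as Hin.
    rewrite Forall_forall in f_dfree, f_wf. apply teval_lipschitz_near; auto. }
  exists d. split; [exact Hd|]. exists L. split; [exact HL|].
  intros u v Hu Hv Nu Nv j Hj. apply (H u v Hu Hv Nu Nv j Hj).
Qed.

Lemma run_Df_field (Q : sform) (w : state) (T : R) (phi : R -> state) (z : R) (j : nat) :
  is_run I (mkODE xs f Q) w T phi -> 0 <= z <= T -> In j xs ->
  phi z (Df j) = ode_field I xs f (fun i => phi z (Pl i)) j.
Proof.
  intros Hr Hz Hj. destruct (In_nth xs j O Hj) as [k [Hk <-]].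
  pose proof (run_rhs I _ w T phi Hr z k Hz Hk) as E. simpl in E. rewrite E.
  unfold ode_field. rewrite ode_rhs_nth by auto. apply teval_agree; [|reflexivity].
  rewrite Forall_forall in f_dfree. apply f_dfree, nth_In. lia.
Qed.

Lemma runs_agree (Q1 Q2 : sform) (w : state) (T1 T2 : R) (phi1 phi2 : R -> state) :
  is_run I (mkODE xs f Q1) w T1 phi1 -> is_run I (mkODE xs f Q2) w T2 phi2 -> T1 <= T2 ->
  forall z, 0 <= z <= T1 -> phi1 z = phi2 z.
Proof.
  intros R1 R2 HT.
  assert (Hx : forall z, 0 <= z <= T1 -> forall j, In j xs -> phi1 z (Pl j) = phi2 z (Pl j)).
  { apply (ode_unique xs (ode_field I xs f) (fun j => w (Pl j)) T1
             (fun z j => phi1 z (Pl j)) (fun z j => phi2 z (Pl j))).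
    - intros us _. apply ode_field_lipschitz.
    - intros z Hz. split; intros j Hj.
      + apply (run_Pl_off I _ w T1 phi1 R1 z j Hz Hj).
      + apply (run_Pl_off I _ w T2 phi2 R2 z j ltac:(lra) Hj).
    - intros HT1 z Hz j Hj.
      rewrite <- (run_Df_field Q1 w T1 phi1 z j), <- (run_Df_field Q2 w T2 phi2 z j)
        by (auto; lra).
      split; [apply (run_deriv I _ w T1 phi1 R1); auto|].
      apply has_deriv_within_le with T2; auto.
      apply (run_deriv I _ w T2 phi2 R2); auto; lra.
    - intros j Hj. simpl. rewrite (run_init_Pl I _ w T1 phi1 R1), (run_init_Pl I _ w T2 phi2 R2).
      reflexivity. }
  intros z Hz.
  assert (HPl : forall j, phi1 z (Pl j) = phi2 z (Pl j)).
  { intro j. destruct (in_dec Nat.eq_dec j xs) as [Hj|Hj]; [apply Hx; auto|].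
    rewrite (run_Pl_off I _ w T1 phi1 R1 z j Hz Hj),
      (run_Pl_off I _ w T2 phi2 R2 z j ltac:(lra) Hj).
    reflexivity. }
  apply functional_extensionality. intros [j|j]; [apply HPl|].
  destruct (in_dec Nat.eq_dec j xs) as [Hj|Hj].
  - rewrite (run_Df_field Q1 w T1 phi1 z j), (run_Df_field Q2 w T2 phi2 z j) by (auto; lra).
    f_equal. apply functional_extensionality. exact HPl.
  - rewrite (run_Df_off I _ w T1 phi1 R1 z j Hz Hj),
      (run_Df_off I _ w T2 phi2 R2 z j ltac:(lra) Hj).
    reflexivity.
Qed.

Lemma valid_uniq (Q1 Q2 : sform) (P : fml) :
  valid I (FIff (FAnd (FDia (mkODE xs f Q1) P) (FDia (mkODE xs f Q2) P))
                (FDia (mkODE xs f (SAnd Q1 Q2)) P)).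
Proof.
  intros w. apply fsat_FIff. split.
  - intros [[nu1 [R1 P1]] [nu2 [R2 P2]]].
    apply ode_rel_is_run in R1. destruct R1 as [T1 [phi1 [R1 E1]]].
    apply ode_rel_is_run in R2. destruct R2 as [T2 [phi2 [R2 E2]]].
    destruct (Rle_lt_dec T1 T2) as [HT|HT].
    + exists nu1. split; auto. apply ode_rel_is_run. exists T1, phi1. split; auto.
      apply is_run_change_dom with Q1; auto. intros z Hz.
      split; [apply (run_dom I _ w T1 phi1 R1 z Hz)|].
      rewrite (runs_agree Q1 Q2 w T1 T2 phi1 phi2 R1 R2 HT z Hz).
      apply (run_dom I _ w T2 phi2 R2). lra.
    + exists nu2. split; auto. apply ode_rel_is_run. exists T2, phi2. split; auto.
      apply is_run_change_dom with Q2; auto. intros z Hz.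
      split; [|apply (run_dom I _ w T2 phi2 R2 z Hz)].
      rewrite (runs_agree Q2 Q1 w T2 T1 phi2 phi1 R2 R1 ltac:(lra) z Hz).
      apply (run_dom I _ w T1 phi1 R1). lra.
  - intros [nu [R HP]]. apply ode_rel_is_run in R. destruct R as [T [phi [R E]]].
    split; exists nu; split; auto; apply ode_rel_is_run; exists T, phi; split; auto;
      apply is_run_change_dom with (SAnd Q1 Q2); auto; intros z Hz;
      apply (run_dom I _ w T phi R z Hz).
Qed.

End OdeField.

Lemma Q2R_0 : Q2R 0%Q = 0.
Proof. unfold Q2R. simpl. lra. Qed.

Lemma Q2R_m1 : Q2R (-1)%Q = -1.
Proof. unfold Q2R. simpl. lra. Qed.

Section Adjoint.

Context {ar : nat -> nat} (I : dL_interp ar) (xs : list nat) (f : list dterm) (ys : list nat).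
Hypothesis xs_nodup : NoDup xs.
Hypothesis f_length : length f = length xs.
Hypothesis f_dfree : Forall dfree_term f.
Hypothesis ys_nodup : NoDup ys.
Hypothesis ys_length : length ys = length xs.
Hypothesis ys_fresh : forall y, In y ys -> ~ In y xs /\ forall t, In t f -> ~ occurs_term y t.

Let g := map (fun t => TNeg (ren_term (lookup xs ys) t)) f.

Lemma teval_adjoint_rhs (k : nat) (s : state) : (k < length xs)%nat ->
  teval I s (nth k g (TConst 0)) = - teval I s (ren_term (lookup xs ys) (nth k f (TConst 0))).
Proof.
  intros Hk. unfold g.
  set (h := fun t => TNeg (ren_term (lookup xs ys) t)).
  rewrite nth_indep with (d' := h (TConst 0)) by (rewrite length_map; lia).
  rewrite map_nth. unfold h. simpl. rewrite Q2R_m1. ring.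
Qed.

Lemma ren_rhs_compat (s1 s2 : state) (k : nat) :
  (forall j, ~ In j ys -> s1 (Pl (lookup xs ys j)) = s2 (Pl j)) -> (k < length xs)%nat ->
  teval I s1 (ren_term (lookup xs ys) (nth k f (TConst 0))) = teval I s2 (nth k f (TConst 0)).
Proof.
  intros H Hk. assert (Hin : In (nth k f (TConst 0)) f) by (apply nth_In; lia).
  rewrite Forall_forall in f_dfree. apply teval_ren_term; auto.
  intros j Hj. apply H. intro Hy. apply (proj2 (ys_fresh j Hy) _ Hin Hj).
Qed.

Lemma valid_dadj (Q : sform) :
  dfree_sf Q -> (forall y, In y ys -> ~ occurs_sf y Q) ->
  valid I (FIff (FDia (mkODE xs f Q) (vec_eq xs ys))
                (FDia (mkODE ys g (ren_sf (lookup xs ys) Q)) (vec_eq ys xs))).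
Proof.
  intros HQd HQo w. apply fsat_FIff.
  assert (Hgl : length g = length xs) by (unfold g; rewrite length_map; auto).
  assert (Hlk : forall k, (k < length xs)%nat -> lookup xs ys (nth k xs O) = nth k ys O)
    by (intros; apply lookup_nth; auto).
  assert (Hlk' : forall k, (k < length xs)%nat -> lookup ys xs (nth k ys O) = nth k xs O)
    by (intros; apply lookup_nth; auto; lia).
  assert (HQren : forall s1 s2 : state,
    (forall j, ~ In j ys -> s1 (Pl (lookup xs ys j)) = s2 (Pl j)) ->
    (sf_sat I s1 (ren_sf (lookup xs ys) Q) <-> sf_sat I s2 Q)).
  { intros s1 s2 H. apply sf_sat_ren_sf; auto.
    intros j Hj. apply H. intro Hy. apply (HQo j Hy Hj). }
  split; intros [nu [R Hv]]; apply ode_rel_is_run in R; destruct R as [T [psi [Hr <-]]].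
  - destruct (run_reverse I xs ys w T psi ys_nodup ys_length f g Q (ren_sf (lookup xs ys) Q)
      (fun j Hj => proj1 (ys_fresh j Hj)) Hgl Hr Hv) as [Hr' Hv'].
    + intros s1 s2 H1 H2.
      assert (C : forall j, ~ In j ys -> s1 (Pl (lookup xs ys j)) = s2 (Pl j)).
      { intros j Hj. destruct (in_dec Nat.eq_dec j xs) as [Hx|Hx].
        - destruct (In_nth xs j O Hx) as [k [Hk <-]]. rewrite Hlk, H1 by auto.
          destruct in_dec as [_|Hn]; [rewrite Hlk'; auto|].
          exfalso. apply Hn, nth_In. lia.
        - rewrite lookup_notin, H1 by auto. destruct in_dec; [contradiction|]. rewrite H2; auto. }
      split; [|apply HQren, C].
      intros k Hk. rewrite teval_adjoint_rhs by auto. f_equal. apply ren_rhs_compat; auto.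
    + eexists. split; [|exact Hv']. apply ode_rel_is_run. eauto.
  - destruct (run_reverse I ys xs w T psi xs_nodup ltac:(lia) g f (ren_sf (lookup xs ys) Q) Q
      (fun j Hj Hy => proj1 (ys_fresh j Hy) Hj) ltac:(lia) Hr Hv) as [Hr' Hv'].
    + intros s1 s2 H1 H2.
      assert (C : forall j, ~ In j ys -> s2 (Pl (lookup xs ys j)) = s1 (Pl j)).
      { intros j Hj. rewrite H1. destruct in_dec as [Hx|Hx]; [reflexivity|].
        rewrite lookup_notin, H2; auto. }
      split; [|symmetry; apply HQren, C].
      intros k Hk. rewrite ys_length in Hk. rewrite teval_adjoint_rhs, Ropp_involutive by auto.
      symmetry. apply ren_rhs_compat; auto.
    + eexists. split; [|exact Hv']. apply ode_rel_is_run. eauto.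
Qed.

End Adjoint.

Section Continuity.

Context {ar : nat -> nat} (I : dL_interp ar) (xs : list nat) (f : list dterm).
Hypothesis xs_nodup : NoDup xs.
Hypothesis f_length : length f = length xs.
Hypothesis f_dfree : Forall dfree_term f.
Hypothesis f_wf : Forall (wf_term ar) f.

Lemma solution_is_run (Q : sform) (w : state) (h : R) (Y : R -> nat -> R) :
  dfree_sf Q -> 0 < h ->
  (forall t, agree_off xs (fun j => w (Pl j)) (Y t)) ->
  (forall j, Y 0 j = w (Pl j)) ->
  (forall z, 0 <= z <= h -> forall j, In j xs ->
     has_deriv_within h (fun s => Y s j) z (ode_field I xs f (Y z) j)) ->
  (forall z, 0 <= z <= h -> sf_sat I (state_of (Y z)) Q) ->
  is_run I (mkODE xs f Q) w h
    (fun s v => match v with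
       | Pl j => Y s j
       | Df j => if in_dec Nat.eq_dec j xs then ode_field I xs f (Y s) j else w (Df j)
       end).
Proof.
  intros HQ Hh Yoff Y0 Yder YQ. split; [lra|]. split.
  - intros [j|j] Hv; simpl; [apply Y0|].
    destruct in_dec; [|reflexivity]. exfalso. apply Hv. eauto.
  - intros z Hz. simpl. split; [|split; [|split]].
    + apply (Forall2_nth_iff _ _ _ O (TConst 0)). split; [lia|].
      intros k Hk. destruct in_dec as [_|Hn]; [|exfalso; apply Hn, nth_In; lia].
      unfold ode_field. rewrite ode_rhs_nth by auto. apply teval_agree; [|reflexivity].
      rewrite Forall_forall in f_dfree. apply f_dfree, nth_In. lia.
    + apply (sf_sat_agree I (state_of (Y z))); auto.
    + intros [j|j] Hv.
      * rewrite Y0. apply Yoff. intro Hj. apply Hv. eauto.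
      * destruct in_dec; [|reflexivity]. exfalso. apply Hv. eauto.
    + intros _ i Hi. destruct in_dec; [apply Yder; auto | contradiction].
Qed.

Lemma field_nonzero_component (w : state) :
  (exists t, In t f /\ teval I w t <> 0) ->
  exists k, (k < length xs)%nat /\ ode_field I xs f (fun j => w (Pl j)) (nth k xs O) <> 0.
Proof.
  intros [t0 [Ht0 Ht0nz]]. destruct (In_nth f t0 (TConst 0) Ht0) as [k [Hk Hkt]].
  exists k. split; [lia|].
  assert (Hdt0 : dfree_term t0) by (rewrite Forall_forall in f_dfree; auto).
  unfold ode_field. rewrite ode_rhs_nth by (auto; lia).
  rewrite Hkt, (teval_agree I _ w) by (auto; reflexivity). exact Ht0nz.
Qed.

Lemma Rabs_drift_neq (a b h c K : R) :
  0 < h -> 0 < Rabs c -> K <= Rabs c / 2 -> Rabs (a - b - h * c) <= h * K -> a <> b.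
Proof.
  intros Hh Hc HK H <-. rewrite Rminus_diag, Rminus_0_l, Rabs_Ropp, Rabs_mult, Rabs_right in H
    by lra.
  assert (h * K <= h * (Rabs c / 2)) by (apply Rmult_le_compat_l; lra). nra.
Qed.

Lemma moving_run (w : state) (e : dterm) (j0 : nat) :
  dfree_term e -> wf_term ar e -> teval I w e > 0 ->
  In j0 xs -> ode_field I xs f (fun j => w (Pl j)) j0 <> 0 ->
  exists T phi, is_run I (mkODE xs f (SCmp CGt e (TConst 0))) w T phi /\
    phi T (Pl j0) <> w (Pl j0).
Proof.
  intros Hed Hew He Hj0 Hc. set (u0 := fun j => w (Pl j)) in *.
  set (c := ode_field I xs f u0 j0) in *. apply Rabs_pos_lt in Hc.
  set (e0 := teval I (state_of u0) e).
  assert (He0 : 0 < e0) by (unfold e0; rewrite (teval_agree I _ w); auto; lra).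
  destruct (lipschitz_near_local xs (fun u => teval I (state_of u) e) u0 (e0 / 2)
              ltac:(lra) (teval_lipschitz_near I xs e u0 Hed Hew)) as [de [Hde [Le [_ He_near]]]].
  destruct (ode_field_lipschitz I xs f f_length f_dfree f_wf u0) as [dF [HdF [LF [HLF HFL]]]].
  pose proof (pos_INR (length xs)) as Hn. set (n := INR (length xs)) in *.
  (* small enough that [e] stays positive and the drift stays within [|c| / 2] of [h c] *)
  set (rho := Rmin (Rmin de dF) (Rabs c / 2 / (LF * n + 1))).
  assert (Hrde : rho <= de) by (eapply Rle_trans; [apply Rmin_l | apply Rmin_l]).
  assert (HrdF : rho <= dF) by (eapply Rle_trans; [apply Rmin_l | apply Rmin_r]).
  assert (Hrc : rho <= Rabs c / 2 / (LF * n + 1)) by apply Rmin_r.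
  assert (Hrho : 0 < rho) by (repeat apply Rmin_pos; auto; apply Rdiv_lt_0_compat; nra).
  assert (HLFn : LF * (n * rho) <= Rabs c / 2).
  { rewrite <- Rmult_assoc. eapply Rle_trans; [apply Rmult_le_compat_l; [nra | exact Hrc]|].
    apply mult_div_succ_le; nra. }
  destruct (ode_local_existence xs (ode_field I xs f) u0 rho LF Hrho HLF)
    as [h [Hh [Y [Yoff [Ynear [Y0 [Yder Ydrift]]]]]]].
  { intros u v Hu Hv Nu Nv j Hj. apply HFL; auto; eapply near_on_mono; eauto. }
  do 2 eexists. split.
  - apply solution_is_run; [simpl; auto | exact Hh | exact Yoff | exact Y0 | exact Yder |].
    intros z Hz. simpl. rewrite Q2R_0.
    destruct (He_near (Y z) u0 (Yoff z) (agree_off_refl _ _)) as [_ Hez];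
      [eapply near_on_mono; eauto | apply near_on_refl; lra |].
    apply Rabs_le_between in Hez. fold e0 in Hez. lra.
  - apply (Rabs_drift_neq _ _ h c (LF * (n * rho))); auto.
Qed.

Lemma valid_cont (ys : list nat) (e : dterm) :
  length ys = length xs -> (forall y, In y ys -> ~ In y xs) ->
  dfree_term e -> wf_term ar e ->
  (forall w : state, exists t, In t f /\ teval I w t <> 0) ->
  valid I (FImp (vec_eq xs ys)
                (FIff (FDia (mkODE xs f (SCmp CGt e (TConst 0%Q))) (FNot (vec_eq xs ys)))
                      (FCmp CGt e (TConst 0%Q)))).
Proof.
  intros Hyl Hyx Hed Hew Hnz w.
  apply fsat_FImp. intro Hxy. apply fsat_FIff. simpl. rewrite Q2R_0. split.
  - intros [nu [R _]]. apply ode_rel_is_run in R. destruct R as [T [phi [R _]]].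
    pose proof (run_dom I _ w T phi R 0 ltac:(pose proof (run_nonneg I _ w T phi R); lra)) as H0.
    simpl in H0. rewrite Q2R_0 in H0.
    rewrite (teval_agree I w (phi 0) e Hed); auto.
    intros j _. symmetry. apply (run_init_Pl I _ w T phi R).
  - intro He. destruct (field_nonzero_component w (Hnz w)) as [k [Hk Hc]].
    destruct (moving_run w e (nth k xs O) Hed Hew He ltac:(apply nth_In; lia) Hc)
      as [T [phi [Hrun Hmoved]]].
    exists (phi T). split; [apply ode_rel_is_run; eauto|].
    rewrite fsat_vec_eq by lia. rewrite fsat_vec_eq in Hxy by lia. intro Hxy'.
    apply Hmoved. rewrite (Hxy' k Hk), (Hxy k Hk).
    apply (run_Pl_off I _ w T phi Hrun); [split; [apply (run_nonneg I _ w T phi Hrun) | lra]|].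
    apply Hyx, nth_In. lia.
Qed.

End Continuity.

Theorem lemma5p1 (ar : nat -> nat) (I : dL_interp ar)
  (xs : list nat) (f : list dterm) (ys : list nat)
  (Hxs : NoDup xs) (Hlen : length f = length xs)
  (Hfdf : List.Forall dfree_term f) (Hfwf : List.Forall (wf_term ar) f)
  (Hys : NoDup ys) (Hylen : length ys = length xs)
  (Hfresh : forall y, In y ys -> ~ In y xs /\ forall t, In t f -> ~ occurs_term y t) :
  (* (Uniq) *)
  (forall (Q1 Q2 : sform) (P : fml),
     dfree_sf Q1 -> wf_sf ar Q1 -> dfree_sf Q2 -> wf_sf ar Q2 -> wf_fml ar P ->
     valid I (FIff (FAnd (FDia (mkODE xs f Q1) P) (FDia (mkODE xs f Q2) P))
                   (FDia (mkODE xs f (SAnd Q1 Q2)) P)))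
  /\
  (* (Cont) *)
  (forall e : dterm,
     dfree_term e -> wf_term ar e -> (forall y, In y ys -> ~ occurs_term y e) ->
     (forall w : state, exists t, In t f /\ teval I w t <> 0) ->
     valid I (FImp (vec_eq xs ys)
                   (FIff (FDia (mkODE xs f (SCmp CGt e (TConst 0%Q))) (FNot (vec_eq xs ys)))
                         (FCmp CGt e (TConst 0%Q)))))
  /\
  (* (Dadj) *)
  (forall Q : sform,
     dfree_sf Q -> wf_sf ar Q -> (forall y, In y ys -> ~ occurs_sf y Q) ->
     valid I (FIff (FDia (mkODE xs f Q) (vec_eq xs ys))
                   (FDia (mkODE ys (map (fun t => TNeg (ren_term (lookup xs ys) t)) f)
                                   (ren_sf (lookup xs ys) Q))
                         (vec_eq ys xs)))).
Proof.
  split; [|split].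
  - intros Q1 Q2 P _ _ _ _ _. apply valid_uniq; auto.
  - intros e Hed Hew _ Hnz. apply valid_cont; auto. intros y Hy. apply Hfresh, Hy.
  - intros Q HQd _ HQo. apply valid_dadj; auto.
Qed.
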